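(* Let $0<\beta<2$ and let $\Lambda>0$, $\delta>0$ with $\beta+\delta>1$. For $\varepsilon$ with $0<\varepsilon<\beta/2$, and additionally $\varepsilon<\frac{\beta-1}{2}$ if $\beta>1$, let $u_\varepsilon\in C^1(\mathbb{R})$ be an even function of the form \[u_\varepsilon(x)=\begin{cases}|x|^{\beta-\varepsilon},&|x|\ge1,\\ \phi(x),&|x|<1,\end{cases}\] where $\phi$ (possibly depending on $\varepsilon$) satisfies $0\le\phi(x)\le\Lambda|x|^{\beta+\delta}$ and $|\phi'(x)|\le\Lambda|x|^{\beta+\delta-1}$ for $|x|\le1$. Then there exist $\varepsilon_0>0$ and constants $C_0,C_1>0$, independent of $\varepsilon$, such that for all admissible $0<\varepsilon<\varepsilon_0$ \[\mathcal{L}u_\varepsilon(0)\ge\frac{C_0}{\varepsilon},\qquad 0<\Gamma_2(u_\varepsilon)(0)\le\frac{C_1}{\varepsilon}.\] In particular, for every $\mu>0$ there exists such a $u$ with $0<\Gamma_2(u)(0)<\mu(\mathcal{L}u(0))^2<\infty$.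
   Context: Here $d=1$: $c_{\beta,1}=\frac{2^\beta\Gamma(\frac{1+\beta}{2})}{\pi^{1/2}|\Gamma(-\frac{\beta}{2})|}$, $\mathcal{L}u(x)=c_{\beta,1}\int_{\mathbb{R}}\frac{u(x+h)-2u(x)+u(x-h)}{|h|^{1+\beta}}dh$, $\Gamma_2(u)(x)=c_{\beta,1}^2\int_{\mathbb{R}}\int_{\mathbb{R}}\frac{[u(x+h+\sigma)-u(x+h)-u(x+\sigma)+u(x)]^2}{|h|^{1+\beta}|\sigma|^{1+\beta}}dh\,d\sigma$ (defined by these integrals also for unbounded functions when they converge). *)

From Stdlib Require Import Reals Lra ClassicalEpsilon.
Open Scope R_scope.

(* |x|^p, with the convention 0^p = 0 (used only for p > 0, or away from 0). *)
Definition apow (x p : R) : R :=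
  if Rlt_dec 0 (Rabs x) then Rpower (Rabs x) p else 0.

Definition ImpIntPos (f : R -> R) (l : R) : Prop :=
  forall e, 0 < e -> exists a0 b0, 0 < a0 /\
    forall a b, 0 < a < a0 -> b0 < b ->
      exists pr : Riemann_integrable f a b, Rabs (RiemannInt pr - l) < e.

Definition ImpIntR (f : R -> R) (l : R) : Prop :=
  exists l1 l2, ImpIntPos f l1 /\ ImpIntPos (fun x => f (- x)) l2 /\ l = l1 + l2.

(* Euler Gamma function: integral for s > 0, and Gamma(s) = Gamma(s+1)/s for
   s in (-1,0] (only used for s = -beta/2 with 0 < beta < 2). *)
Definition Gamma_pos (s : R) : R :=
  epsilon (inhabits 0)
    (fun g => ImpIntPos (fun t => Rpower t (s - 1) * exp (- t)) g).

Definition Gamma (s : R) : R :=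
  if Rlt_dec 0 s then Gamma_pos s else Gamma_pos (s + 1) / s.

Definition c_beta (beta : R) : R :=
  Rpower 2 beta * Gamma ((1 + beta) / 2) / (sqrt PI * Rabs (Gamma (- beta / 2))).

Definition frac_lap_at (beta : R) (u : R -> R) (x l : R) : Prop :=
  exists I, ImpIntR (fun h => (u (x + h) - 2 * u x + u (x - h)) / apow h (1 + beta)) I
            /\ l = c_beta beta * I.

(* "Gamma_2(u)(x) = g", as the iterated integral (inner in h, outer in sigma),
   both improper integrals converging. *)
Definition gamma2_at (beta : R) (u : R -> R) (x g : R) : Prop :=
  exists (F : R -> R) (I : R),
    (forall s, s <> 0 ->
       ImpIntR (fun h => (u (x + h + s) - u (x + h) - u (x + s) + u x) ^ 2
                          / (apow h (1 + beta) * apow s (1 + beta))) (F s))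
    /\ ImpIntR F I /\ g = c_beta beta ^ 2 * I.

Definition admissible (beta Lam delta eps : R) (u : R -> R) : Prop :=
  0 < eps /\ eps < beta / 2 /\ (1 < beta -> eps < (beta - 1) / 2) /\
  (exists u' : R -> R,
     (forall x, derivable_pt_lim u x (u' x)) /\ continuity u' /\
     (forall x, Rabs x < 1 -> Rabs (u' x) <= Lam * apow x (beta + delta - 1))) /\
  (forall x, u (- x) = u x) /\
  (forall x, 1 <= Rabs x -> u x = Rpower (Rabs x) (beta - eps)) /\
  (forall x, Rabs x < 1 -> 0 <= u x <= Lam * apow x (beta + delta)).

From Stdlib Require Import Reals Lra ClassicalEpsilon.
From Coquelicot Require Import Coquelicot.
Open Scope R_scope.

(* Structure of the proof.
   - Improper integrals over (0, +oo) of continuous nonnegative functions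
     are obtained as suprema of integrals over compact subintervals, so all
     estimates are bounds on such integrals ([int_le_on], [int_le_from]).
   - L u(0): by evenness and u(0) = 0 the integrand is 2 u(h) |h|^(-1-beta);
     its part over [1, +oo) alone equals 2/eps.
   - Gamma_2(u)(0): the integrand is D(s,h)^2 |h|^(-1-beta) |s|^(-1-beta)
     with D(s,h) = u(h+s) - u(h) - u(s).  Pointwise bounds on D for
     h <= |s|/2, |s|/2 <= h <= 2|s| and h >= 2|s| (mean value theorem and
     power bounds on u, u') give an inner integral O(|s|^(2e-1-2beta)) for
     every exponent e in [beta-eps, beta+delta].  The choice e = beta - eps
     gives decay |s|^(-1-2eps) at infinity, hence an outer integral O(1/eps),
     and e = q > beta gives integrability at s = 0.  The inner integral is
     continuous in s (tails small uniformly in s, uniform continuity on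
     compacts), so the outer integral exists; it is positive because
     (h+s)^a <> h^a + s^a for a = beta - eps <> 1.
   - The "in particular" part uses an explicit admissible profile and
     eps small compared with mu C0^2 / C1. *)

Lemma exp_le_compat x y : x <= y -> exp x <= exp y.
Proof. intros [Hlt| ->]; [left; apply exp_increasing, Hlt| right; reflexivity]. Qed.

Lemma ln_le_compat x y : 0 < x -> x <= y -> ln x <= ln y.
Proof. intros Hx [Hlt| ->]; [left; apply ln_increasing; lra| right; reflexivity]. Qed.

Lemma Rpower_gt_0 x e : 0 < Rpower x e.
Proof. apply exp_pos. Qed.

Lemma Rpower_1_base e : Rpower 1 e = 1.
Proof. unfold Rpower; rewrite ln_1, Rmult_0_r, exp_0; reflexivity. Qed.

Lemma Rpower_le_base_nonpos x y e : 0 < x -> x <= y -> e <= 0 -> Rpower y e <= Rpower x e.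
Proof.
  intros Hx Hxy He; unfold Rpower; apply exp_le_compat.
  assert (ln x <= ln y) by (apply ln_le_compat; lra).
  nra.
Qed.

Lemma Rpower_le_exp_small x e f : 0 < x -> x <= 1 -> e <= f -> Rpower x f <= Rpower x e.
Proof.
  intros Hx Hx1 Hef; unfold Rpower; apply exp_le_compat.
  assert (ln x <= 0) by (rewrite <- ln_1; apply ln_le_compat; lra).
  nra.
Qed.

Lemma Rpower_lt_exp_small x e f : 0 < x -> x < 1 -> e < f -> Rpower x f < Rpower x e.
Proof.
  intros Hx Hx1 Hef; unfold Rpower; apply exp_increasing.
  assert (ln x < 0) by (rewrite <- ln_1; apply ln_increasing; lra).
  nra.
Qed.

Lemma Rpower_sqr x e : Rpower x e ^ 2 = Rpower x (2 * e).
Proof. simpl; rewrite Rmult_1_r, <- Rpower_plus; f_equal; ring. Qed.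

Lemma Rpower_2 x : 0 < x -> Rpower x 2 = x ^ 2.
Proof. intros Hx; rewrite <- Rpower_pow by exact Hx; f_equal; simpl; ring. Qed.

Lemma Rpower_inv_base x e : 0 < x -> Rpower (/ x) e = Rpower x (- e).
Proof. intros Hx; unfold Rpower; rewrite ln_Rinv by exact Hx; f_equal; ring. Qed.

Lemma Rpower_continuity_pt x e : 0 < x -> continuity_pt (fun y => Rpower y e) x.
Proof.
  intros Hx; apply derivable_continuous_pt.
  exists (e * Rpower x (e - 1)); apply derivable_pt_lim_power, Hx.
Qed.

Lemma Rpower_comparable t r k : 0 < r -> r / 2 <= t <= 3 * r / 2 -> -1 <= k <= 1 ->
  Rpower t k <= 2 * Rpower r k.
Proof.
  intros Hr Ht Hk. destruct (Rle_dec 0 k).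
  - apply Rle_trans with (Rpower (3 / 2 * r) k); [apply Rle_Rpower_l; lra|].
    rewrite <- Rpower_mult_distr by lra. apply Rmult_le_compat_r; [left; apply Rpower_gt_0|].
    apply Rle_trans with (Rpower (3 / 2) 1); [apply Rle_Rpower; lra| rewrite Rpower_1; lra].
  - apply Rle_trans with (Rpower (/ 2 * r) k); [apply Rpower_le_base_nonpos; lra|].
    rewrite <- Rpower_mult_distr, Rpower_inv_base by lra.
    apply Rmult_le_compat_r; [left; apply Rpower_gt_0|].
    apply Rle_trans with (Rpower 2 1); [apply Rle_Rpower; lra| rewrite Rpower_1; lra].
Qed.

Lemma Rpower_half_nonpos r k : 0 < r -> -2 <= k <= 0 -> Rpower (r / 2) k <= 4 * Rpower r k.
Proof.
  intros Hr Hk. replace (r / 2) with (/ 2 * r) by field.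
  rewrite <- Rpower_mult_distr, Rpower_inv_base by lra.
  apply Rmult_le_compat_r; [left; apply Rpower_gt_0|].
  apply Rle_trans with (Rpower 2 2); [apply Rle_Rpower; lra| rewrite Rpower_2; lra].
Qed.

Lemma Rpower_le_ends r a b k : 0 < a -> a <= r <= b -> Rpower r k <= Rpower a k + Rpower b k.
Proof.
  intros Ha Hr. pose proof (Rpower_gt_0 a k). pose proof (Rpower_gt_0 b k).
  destruct (Rle_dec 0 k).
  - assert (Rpower r k <= Rpower b k) by (apply Rle_Rpower_l; lra). lra.
  - assert (Rpower r k <= Rpower a k) by (apply Rpower_le_base_nonpos; lra). lra.
Qed.

Lemma Rpower_small_near_0 c k t y0 : 0 <= c -> 0 < k -> 0 < t -> 0 < y0 ->
  exists y, 0 < y <= y0 /\ forall z, 0 < z <= y -> c * Rpower z k <= t.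
Proof.
  intros Hc Hk Ht Hy0. set (t' := t / (c + 1)).
  assert (Ht' : 0 < t') by (unfold t'; apply Rdiv_lt_0_compat; lra).
  exists (Rmin y0 (Rpower t' (/ k))). split.
  - split; [apply Rmin_glb_lt; [lra| apply Rpower_gt_0]| apply Rmin_l].
  - intros z Hz.
    assert (Hz2 : z <= Rpower t' (/ k)) by (pose proof (Rmin_r y0 (Rpower t' (/ k))); lra).
    assert (Rpower z k <= t').
    { apply Rle_trans with (Rpower (Rpower t' (/ k)) k); [apply Rle_Rpower_l; lra|].
      rewrite Rpower_mult. replace (/ k * k) with 1 by (field; lra). rewrite Rpower_1; lra. }
    assert (c * t' <= t) by (apply Rle_trans with ((c + 1) * t');
      [apply Rmult_le_compat_r; lra| unfold t'; right; field; lra]).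
    nra.
Qed.

Lemma Rpower_small_near_infty c k t N0 : 0 <= c -> 0 < k -> 0 < t ->
  exists N, N0 <= N /\ 0 < N /\ forall z, N <= z -> c * Rpower z (- k) <= t.
Proof.
  intros Hc Hk Ht. set (t' := t / (c + 1)).
  assert (Ht' : 0 < t') by (unfold t'; apply Rdiv_lt_0_compat; lra).
  set (N := Rmax (Rmax N0 1) (Rpower t' (- / k))).
  assert (Rmax N0 1 <= N) by apply Rmax_l. assert (Rpower t' (- / k) <= N) by apply Rmax_r.
  pose proof (Rmax_l N0 1). pose proof (Rmax_r N0 1).
  exists N. split; [lra| split; [lra|]]. intros z Hz.
  assert (Rpower z (- k) <= t').
  { apply Rle_trans with (Rpower (Rpower t' (- / k)) (- k)).
    - apply Rpower_le_base_nonpos; [apply Rpower_gt_0| lra| lra].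
    - rewrite Rpower_mult. replace (- / k * - k) with 1 by (field; lra). rewrite Rpower_1; lra. }
  assert (c * t' <= t) by (apply Rle_trans with ((c + 1) * t');
    [apply Rmult_le_compat_r; lra| unfold t'; right; field; lra]).
  pose proof (Rpower_gt_0 z (- k)). nra.
Qed.

(* Strict non-additivity of [x |-> x^a] for a <> 1: this is what makes
   Gamma_2(u)(0) strictly positive. *)
Lemma Rpower_not_additive x y a : 0 < x -> 0 < y -> 0 < a -> a <> 1 ->
  Rpower (x + y) a <> Rpower x a + Rpower y a.
Proof.
  intros Hx Hy Ha Ha1 E.
  set (t := x / (x + y)).
  assert (Ht : 0 < t < 1).
  { unfold t; split; [apply Rdiv_lt_0_compat; lra|].
    apply (Rmult_lt_reg_r (x + y)); [lra|]. field_simplify; lra. }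
  assert (Ex : x = (x + y) * t) by (unfold t; field; lra).
  assert (Ey : y = (x + y) * (1 - t)) by (unfold t; field; lra).
  rewrite Ex in E at 2. rewrite Ey in E at 3.
  rewrite <- !Rpower_mult_distr in E by lra.
  pose proof (Rpower_gt_0 (x + y) a).
  assert (E2 : Rpower t a + Rpower (1 - t) a = 1).
  { apply (Rmult_eq_reg_l (Rpower (x + y) a)); lra. }
  destruct (Rlt_dec a 1).
  - assert (Rpower t 1 < Rpower t a) by (apply Rpower_lt_exp_small; lra).
    assert (Rpower (1 - t) 1 < Rpower (1 - t) a) by (apply Rpower_lt_exp_small; lra).
    rewrite !Rpower_1 in * by lra. lra.
  - assert (Rpower t a < Rpower t 1) by (apply Rpower_lt_exp_small; lra).
    assert (Rpower (1 - t) a < Rpower (1 - t) 1) by (apply Rpower_lt_exp_small; lra).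
    rewrite !Rpower_1 in * by lra. lra.
Qed.

Definition cont_pos (f : R -> R) : Prop := forall x, 0 < x -> continuous f x.
Definition nonneg_pos (f : R -> R) : Prop := forall x, 0 < x -> 0 <= f x.

Lemma cont_pos_of_continuity_pt f : (forall x, 0 < x -> continuity_pt f x) -> cont_pos f.
Proof. intros H x Hx; apply continuity_pt_filterlim, H, Hx. Qed.

Lemma cont_pos_power e : cont_pos (fun x => Rpower x e).
Proof. apply cont_pos_of_continuity_pt; intros; apply Rpower_continuity_pt; assumption. Qed.

Lemma cont_pos_scal c f : cont_pos f -> cont_pos (fun x => c * f x).
Proof. intros H x Hx; apply (continuous_mult (fun _ => c) f); [apply continuous_const| apply H, Hx]. Qed.

Lemma cont_pos_plus f g : cont_pos f -> cont_pos g -> cont_pos (fun x => f x + g x).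
Proof. intros H1 H2 x Hx; apply (continuous_plus f g); auto. Qed.

Lemma ex_RInt_pos f a b : cont_pos f -> 0 < a -> a <= b -> ex_RInt f a b.
Proof.
  intros Hc Ha Hab. apply (ex_RInt_continuous (V := R_CompleteNormedModule)).
  intros z Hz. rewrite Rmin_left in Hz by lra. apply Hc; lra.
Qed.

(* Coquelicot's linearity lemmas, stated for real-valued integrands. *)
Lemma RInt_plus_R f g a b : ex_RInt f a b -> ex_RInt g a b ->
  RInt (fun x => f x + g x) a b = RInt f a b + RInt g a b.
Proof. exact (RInt_plus f g a b). Qed.

Lemma RInt_scal_R f a b c : ex_RInt f a b -> RInt (fun x => c * f x) a b = c * RInt f a b.
Proof. exact (RInt_scal f a b c). Qed.

Lemma RInt_pos_nonneg f a b : cont_pos f -> nonneg_pos f -> 0 < a -> a <= b -> 0 <= RInt f a b.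
Proof.
  intros Hc Hn Ha Hab. apply RInt_ge_0; [lra| apply ex_RInt_pos; auto|].
  intros; apply Hn; lra.
Qed.

Lemma RInt_pos_enlarge f a b a' b' : cont_pos f -> nonneg_pos f ->
  0 < a' -> a' <= a -> a <= b -> b <= b' -> RInt f a b <= RInt f a' b'.
Proof.
  intros Hc Hn H1 H2 H3 H4.
  rewrite <- (RInt_Chasles f a' a b') by (apply ex_RInt_pos; auto; lra).
  rewrite <- (RInt_Chasles f a b b') by (apply ex_RInt_pos; auto; lra).
  assert (0 <= RInt f a' a) by (apply RInt_pos_nonneg; auto; lra).
  assert (0 <= RInt f b b') by (apply RInt_pos_nonneg; auto; lra).
  unfold plus; simpl; lra.
Qed.

Lemma RInt_power a b e : 0 < a -> a <= b -> e + 1 <> 0 ->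
  RInt (fun x => Rpower x e) a b = (Rpower b (e + 1) - Rpower a (e + 1)) / (e + 1).
Proof.
  intros Ha Hab He. apply is_RInt_unique.
  replace ((Rpower b (e + 1) - Rpower a (e + 1)) / (e + 1)) with
    (minus (Rpower b (e + 1) / (e + 1)) (Rpower a (e + 1) / (e + 1)))
    by (unfold minus, plus, opp; simpl; field; exact He).
  apply (is_RInt_derive (fun x => Rpower x (e + 1) / (e + 1))).
  - intros x Hx. rewrite Rmin_left, Rmax_right in Hx by lra.
    apply is_derive_Reals.
    replace (Rpower x e) with ((e + 1) * Rpower x (e + 1 - 1) * / (e + 1))
      by (replace (e + 1 - 1) with e by ring; field; exact He).
    apply derivable_pt_lim_scal_right, derivable_pt_lim_power; lra.
  - intros x Hx. rewrite Rmin_left, Rmax_right in Hx by lra.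
    apply continuity_pt_filterlim, Rpower_continuity_pt; lra.
Qed.

(* [int_le_on f x y M]: every integral of f over [a, b] with 0 < a and
   x <= a <= b <= y is at most M; [int_le_from f x M] is the same on [x, +oo).
   A bound of the second kind on (0, +oo) yields convergence of the improper
   integral (see [ImpIntPos_of_int_le_from]). *)
Definition int_le_on (f : R -> R) (x y M : R) : Prop :=
  forall a b, 0 < a -> x <= a -> a <= b -> b <= y -> RInt f a b <= M.
Definition int_le_from (f : R -> R) (x M : R) : Prop :=
  forall a b, 0 < a -> x <= a -> a <= b -> RInt f a b <= M.

Lemma int_le_on_split f x y z M1 M2 : cont_pos f -> 0 < y -> x <= y -> y <= z ->
  int_le_on f x y M1 -> int_le_on f y z M2 -> int_le_on f x z (M1 + M2).
Proof.
  intros Hc Hy Hxy Hyz H1 H2 a b Ha Hxa Hab Hbz.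
  assert (0 <= M1) by (apply Rle_trans with (RInt f y y); [right; symmetry; exact (RInt_point y f)| apply H1; lra]).
  assert (0 <= M2) by (apply Rle_trans with (RInt f y y); [right; symmetry; exact (RInt_point y f)| apply H2; lra]).
  destruct (Rle_dec b y); [assert (RInt f a b <= M1) by (apply H1; lra); lra|].
  destruct (Rle_dec y a); [assert (RInt f a b <= M2) by (apply H2; lra); lra|].
  rewrite <- (RInt_Chasles f a y b) by (apply ex_RInt_pos; auto; lra).
  assert (RInt f a y <= M1) by (apply H1; lra).
  assert (RInt f y b <= M2) by (apply H2; lra).
  unfold plus; simpl; lra.
Qed.

Lemma int_le_on_of_from f x y M : int_le_from f x M -> int_le_on f x y M.
Proof. intros H a b Ha Hxa Hab _; apply H; assumption. Qed.

Lemma int_le_from_split f x y M1 M2 : cont_pos f -> 0 < y -> x <= y ->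
  int_le_on f x y M1 -> int_le_from f y M2 -> int_le_from f x (M1 + M2).
Proof.
  intros Hc Hy Hxy H1 H2 a b Ha Hxa Hab.
  apply (int_le_on_split f x y (Rmax y b)); auto using Rmax_l, Rmax_r, int_le_on_of_from.
Qed.

Lemma int_le_on_weaken f x y M M' : M <= M' -> int_le_on f x y M -> int_le_on f x y M'.
Proof. intros HM H a b Ha Hxa Hab Hby; apply Rle_trans with M; auto. Qed.

Lemma int_le_from_weaken f x M M' : M <= M' -> int_le_from f x M -> int_le_from f x M'.
Proof. intros HM H a b Ha Hxa Hab; apply Rle_trans with M; auto. Qed.

Lemma int_le_on_compare f g x y M : cont_pos f -> cont_pos g ->
  (forall h, 0 < h -> x < h < y -> f h <= g h) -> int_le_on g x y M -> int_le_on f x y M.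
Proof.
  intros Hf Hg Hle H a b Ha Hxa Hab Hby.
  apply Rle_trans with (RInt g a b); [| apply H; auto].
  apply RInt_le; [lra| apply ex_RInt_pos; auto| apply ex_RInt_pos; auto|].
  intros; apply Hle; lra.
Qed.

Lemma int_le_from_compare f g x M : cont_pos f -> cont_pos g ->
  (forall h, 0 < h -> x < h -> f h <= g h) -> int_le_from g x M -> int_le_from f x M.
Proof.
  intros Hf Hg Hle H a b Ha Hxa Hab.
  apply Rle_trans with (RInt g a b); [| apply H; auto].
  apply RInt_le; [lra| apply ex_RInt_pos; auto| apply ex_RInt_pos; auto|].
  intros; apply Hle; lra.
Qed.

Lemma int_le_on_plus f g x y M1 M2 : cont_pos f -> cont_pos g ->
  int_le_on f x y M1 -> int_le_on g x y M2 -> int_le_on (fun h => f h + g h) x y (M1 + M2).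
Proof.
  intros Hf Hg H1 H2 a b Ha Hxa Hab Hby.
  rewrite RInt_plus_R by (apply ex_RInt_pos; auto).
  assert (RInt f a b <= M1) by (apply H1; auto).
  assert (RInt g a b <= M2) by (apply H2; auto).
  lra.
Qed.

Lemma int_le_from_plus f g x M1 M2 : cont_pos f -> cont_pos g ->
  int_le_from f x M1 -> int_le_from g x M2 -> int_le_from (fun h => f h + g h) x (M1 + M2).
Proof.
  intros Hf Hg H1 H2 a b Ha Hxa Hab.
  rewrite RInt_plus_R by (apply ex_RInt_pos; auto).
  assert (RInt f a b <= M1) by (apply H1; auto).
  assert (RInt g a b <= M2) by (apply H2; auto).
  lra.
Qed.

Lemma int_le_on_power c e x y : 0 <= c -> -1 < e -> 0 < y ->
  int_le_on (fun h => c * Rpower h e) x y (c * Rpower y (e + 1) / (e + 1)).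
Proof.
  intros Hc He Hy a b Ha Hxa Hab Hby.
  rewrite RInt_scal_R by (apply ex_RInt_pos; auto; apply cont_pos_power).
  rewrite RInt_power by (auto; lra).
  unfold Rdiv. rewrite Rmult_assoc. apply Rmult_le_compat_l; auto.
  apply Rmult_le_compat_r; [left; apply Rinv_0_lt_compat; lra|].
  assert (Rpower b (e + 1) <= Rpower y (e + 1)) by (apply Rle_Rpower_l; lra).
  pose proof (Rpower_gt_0 a (e + 1)). lra.
Qed.

Lemma int_le_from_power c e x : 0 <= c -> e < -1 -> 0 < x ->
  int_le_from (fun h => c * Rpower h e) x (c * Rpower x (e + 1) / (- (e + 1))).
Proof.
  intros Hc He Hx a b Ha Hxa Hab.
  rewrite RInt_scal_R by (apply ex_RInt_pos; auto; apply cont_pos_power).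
  rewrite RInt_power by (auto; lra).
  replace ((Rpower b (e + 1) - Rpower a (e + 1)) / (e + 1)) with
    ((Rpower a (e + 1) - Rpower b (e + 1)) / (- (e + 1))) by (field; lra).
  unfold Rdiv. rewrite Rmult_assoc. apply Rmult_le_compat_l; auto.
  apply Rmult_le_compat_r; [left; apply Rinv_0_lt_compat; lra|].
  assert (Rpower a (e + 1) <= Rpower x (e + 1)) by (apply Rpower_le_base_nonpos; lra).
  pose proof (Rpower_gt_0 b (e + 1)). lra.
Qed.

Lemma ImpIntPos_unique f l1 l2 : ImpIntPos f l1 -> ImpIntPos f l2 -> l1 = l2.
Proof.
  intros H1 H2. destruct (Req_dec l1 l2) as [|Hne]; [assumption|]. exfalso.
  set (e := Rabs (l1 - l2) / 2).
  assert (He : 0 < e) by (unfold e; pose proof (Rabs_pos_lt (l1 - l2) ltac:(lra)); lra).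
  destruct (H1 e He) as (a1 & b1 & Ha1 & K1).
  destruct (H2 e He) as (a2 & b2 & Ha2 & K2).
  set (a := Rmin a1 a2 / 2). set (b := Rmax b1 b2 + 1).
  pose proof (Rmin_l a1 a2). pose proof (Rmin_r a1 a2). pose proof (Rmin_glb_lt a1 a2 0 Ha1 Ha2).
  pose proof (Rmax_l b1 b2). pose proof (Rmax_r b1 b2).
  destruct (K1 a b) as [pr1 E1]; [unfold a; lra| unfold b; lra|].
  destruct (K2 a b) as [pr2 E2]; [unfold a; lra| unfold b; lra|].
  rewrite (RiemannInt_P5 pr1 pr2) in E1.
  assert (Rabs (l1 - l2) <= Rabs (RiemannInt pr2 - l2) + Rabs (RiemannInt pr2 - l1)).
  { replace (l1 - l2) with ((RiemannInt pr2 - l2) + - (RiemannInt pr2 - l1)) by ring.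
    rewrite <- (Rabs_Ropp (RiemannInt pr2 - l1)). apply Rabs_triang. }
  unfold e in *; lra.
Qed.

Lemma ImpIntPos_of_int_le_from f M : cont_pos f -> nonneg_pos f -> int_le_from f 0 M ->
  exists l, ImpIntPos f l /\ l <= M /\ (forall a b, 0 < a -> a <= b -> RInt f a b <= l).
Proof.
  intros Hc Hn HB.
  set (E := fun y => exists a b, 0 < a /\ a <= b /\ y = RInt f a b).
  assert (Hb : bound E) by (exists M; intros y (a & b & Ha & Hab & ->); apply HB; lra).
  assert (Hne : exists y, E y) by (exists (RInt f 1 1), 1, 1; repeat split; lra).
  destruct (completeness E Hb Hne) as [l [Hub Hlub]].
  exists l. split; [| split].
  - intros e He.
    assert (Hnot : ~ (forall y, E y -> y <= l - e)).
    { intros Hall. assert (l <= l - e) by (apply Hlub; intros y Hy; apply Hall, Hy). lra. }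
    apply Classical_Pred_Type.not_all_ex_not in Hnot as [y Hy].
    apply Classical_Prop.imply_to_and in Hy as [(a1 & b1 & Ha1 & Hab1 & ->) Hy].
    exists a1, b1. split; [assumption|]. intros a b Ha Hb'.
    assert (Hex : ex_RInt f a b) by (apply ex_RInt_pos; auto; lra).
    exists (ex_RInt_Reals_0 _ _ _ Hex). rewrite <- RInt_Reals.
    assert (RInt f a1 b1 <= RInt f a b) by (apply RInt_pos_enlarge; auto; lra).
    assert (RInt f a b <= l) by (apply Hub; exists a, b; repeat split; lra).
    apply Rabs_def1; lra.
  - apply Hlub. intros y (a & b & Ha & Hab & ->). apply HB; lra.
  - intros a b Ha Hab. apply Hub. exists a, b; auto.
Qed.

(* The value of the improper integral over (0, +oo) (meaningful when it exists). *)
Definition int_pos (f : R -> R) : R := epsilon (inhabits 0) (fun l => ImpIntPos f l).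

Lemma int_pos_spec f M : cont_pos f -> nonneg_pos f -> int_le_from f 0 M ->
  ImpIntPos f (int_pos f) /\ int_pos f <= M /\
  (forall a b, 0 < a -> a <= b -> RInt f a b <= int_pos f).
Proof.
  intros Hc Hn HB. destruct (ImpIntPos_of_int_le_from f M Hc Hn HB) as (l & H1 & H2 & H3).
  assert (E : int_pos f = l).
  { apply (ImpIntPos_unique f); [| exact H1].
    apply (epsilon_spec (inhabits 0) (fun l => ImpIntPos f l)). exists l; exact H1. }
  rewrite E; auto.
Qed.

Lemma ImpIntPos_ext f g l : (forall x, 0 < x -> f x = g x) -> ImpIntPos f l -> ImpIntPos g l.
Proof.
  intros Heq H e He. destruct (H e He) as (a0 & b0 & Ha0 & K).
  exists a0, (Rmax b0 a0). split; [assumption|].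
  intros a b Ha Hb. pose proof (Rmax_l b0 a0). pose proof (Rmax_r b0 a0).
  destruct (K a b) as [pr Hpr]; [lra| lra|].
  assert (Heq' : forall x, Rmin a b < x < Rmax a b -> f x = g x).
  { intros x Hx. rewrite Rmin_left in Hx by lra. apply Heq; lra. }
  assert (Hg : ex_RInt g a b) by (apply (ex_RInt_ext f), ex_RInt_Reals_1; [exact Heq'| exact pr]).
  exists (ex_RInt_Reals_0 _ _ _ Hg).
  rewrite <- RInt_Reals, <- (RInt_ext f g a b Heq'), (RInt_Reals f a b pr). exact Hpr.
Qed.

Lemma pow3_le_exp t : 0 <= t -> t ^ 3 <= 27 * exp t.
Proof.
  intros Ht.
  assert (E : exp t = exp (t / 3) ^ 3).
  { simpl. rewrite Rmult_1_r, <- !exp_plus. f_equal. field. }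
  assert (t / 3 <= exp (t / 3)) by (pose proof (exp_ineq1_le (t / 3)); lra).
  assert ((t / 3) ^ 3 <= exp (t / 3) ^ 3) by (apply pow_incr; lra).
  replace (t ^ 3) with (27 * (t / 3) ^ 3) by (simpl; field). lra.
Qed.

Section GammaPositive.
Variable s : R.
Hypothesis Hs : 0 < s < 2.
Let f := fun t => Rpower t (s - 1) * exp (- t).

Lemma gamma_integrand_cont : cont_pos f.
Proof.
  apply cont_pos_of_continuity_pt. intros x Hx. unfold f.
  apply continuity_pt_mult; [apply Rpower_continuity_pt, Hx|].
  apply derivable_continuous_pt. exists (- exp (- x)).
  apply is_derive_Reals. auto_derive; [exact I| ring].
Qed.

Lemma gamma_integrand_pos x : 0 < x -> 0 < f x.
Proof. intros; unfold f; apply Rmult_lt_0_compat; [apply Rpower_gt_0| apply exp_pos]. Qed.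

(* t^(s-1) e^-t <= t^(s-1) on (0,1] and <= 27 t^(s-4) on [1,+oo). *)
Lemma gamma_integrand_bounded :
  int_le_from f 0 (1 * Rpower 1 (s - 1 + 1) / (s - 1 + 1) + 27 * Rpower 1 (s - 4 + 1) / (- (s - 4 + 1))).
Proof.
  apply int_le_from_split with 1; [apply gamma_integrand_cont| lra| lra| |].
  - apply int_le_on_compare with (fun h => 1 * Rpower h (s - 1));
      [apply gamma_integrand_cont| apply cont_pos_scal, cont_pos_power| |apply int_le_on_power; lra].
    intros h Hh Hh1. unfold f.
    assert (exp (- h) <= 1) by (rewrite <- exp_0; apply exp_le_compat; lra).
    pose proof (Rpower_gt_0 h (s - 1)). nra.
  - apply int_le_from_compare with (fun h => 27 * Rpower h (s - 4));
      [apply gamma_integrand_cont| apply cont_pos_scal, cont_pos_power| |apply int_le_from_power; lra].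
    intros h Hh Hh1. unfold f.
    assert (h ^ 3 <= 27 * exp h) by (apply pow3_le_exp; lra).
    replace (Rpower h (s - 4)) with (Rpower h (s - 1) * / h ^ 3).
    2:{ rewrite <- (Rpower_pow 3 h), <- Rpower_Ropp, <- Rpower_plus by lra. f_equal. simpl. lra. }
    rewrite exp_Ropp.
    pose proof (Rpower_gt_0 h (s - 1)). pose proof (pow_lt h 3 Hh). pose proof (exp_pos h).
    assert (/ exp h <= 27 * / h ^ 3).
    { apply Rmult_le_reg_r with (exp h * h ^ 3); [nra|]. field_simplify; lra. }
    nra.
Qed.

Lemma Gamma_pos_pos : 0 < Gamma_pos s.
Proof.
  destruct (int_pos_spec f _ gamma_integrand_cont
              (fun x Hx => Rlt_le _ _ (gamma_integrand_pos x Hx)) gamma_integrand_bounded)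
    as (_ & _ & H3).
  change (0 < int_pos f).
  apply Rlt_le_trans with (RInt f 1 2); [| apply H3; lra].
  apply RInt_gt_0; [lra| intros; apply gamma_integrand_pos; lra|].
  intros; apply gamma_integrand_cont; lra.
Qed.
End GammaPositive.

Lemma c_beta_pos beta : 0 < beta < 2 -> 0 < c_beta beta.
Proof.
  intros Hb. unfold c_beta.
  assert (G1 : 0 < Gamma ((1 + beta) / 2)).
  { unfold Gamma. destruct (Rlt_dec 0 ((1 + beta) / 2)); [apply Gamma_pos_pos; lra| lra]. }
  assert (G2 : 0 < Rabs (Gamma (- beta / 2))).
  { unfold Gamma. destruct (Rlt_dec 0 (- beta / 2)); [lra|].
    apply Rabs_pos_lt. unfold Rdiv at 1. apply Rmult_integral_contrapositive; split.
    - pose proof (Gamma_pos_pos (- beta / 2 + 1) ltac:(lra)). lra.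
    - apply Rinv_neq_0_compat; lra. }
  pose proof (sqrt_lt_R0 PI PI_RGT_0). pose proof (Rpower_gt_0 2 beta).
  apply Rdiv_lt_0_compat; apply Rmult_lt_0_compat; assumption.
Qed.

Lemma continuity_pt_eps f x0 : continuity_pt f x0 -> forall e, 0 < e -> exists d, 0 < d /\
  forall y, Rabs (y - x0) < d -> Rabs (f y - f x0) < e.
Proof.
  intros H e He. destruct (H e He) as (d & Hd & K). exists d; split; [exact Hd|].
  intros y Hy. destruct (Req_dec y x0) as [->|Hne].
  - rewrite Rminus_diag, Rabs_R0; exact He.
  - apply (K y). split; [split; [exact I| auto]| exact Hy].
Qed.

Lemma continuity_pt_of_eps f c :
  (forall e, 0 < e -> exists d, 0 < d /\ forall y, Rabs (y - c) < d -> Rabs (f y - f c) < e) ->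
  continuity_pt f c.
Proof.
  intros K e He. destruct (K e He) as (d & Hd & Kd). exists d. split; [exact Hd|].
  intros x [_ Hx]. apply Kd, Hx.
Qed.

Lemma continuity_pt_local f g c d : 0 < d -> (forall y, Rabs (y - c) < d -> f y = g y) ->
  continuity_pt g c -> continuity_pt f c.
Proof.
  intros Hd Heq Cg. apply continuity_pt_of_eps. intros e He.
  destruct (continuity_pt_eps g c Cg e He) as (dg & Hdg & Kg).
  exists (Rmin d dg). split; [apply Rmin_glb_lt; assumption|].
  intros y Hy. pose proof (Rmin_l d dg). pose proof (Rmin_r d dg).
  rewrite (Heq y), (Heq c) by (try rewrite Rminus_diag, Rabs_R0; lra). apply Kg; lra.
Qed.

Lemma derivable_pt_lim_local f g x l d : 0 < d -> (forall y, Rabs (y - x) < d -> f y = g y) ->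
  derivable_pt_lim g x l -> derivable_pt_lim f x l.
Proof.
  intros Hd Heq H e He. destruct (H e He) as [del K].
  assert (Hm : 0 < Rmin del d) by (apply Rmin_glb_lt; [apply cond_pos| exact Hd]).
  exists (mkposreal _ Hm). intros h Hh Hhd. simpl in Hhd.
  pose proof (Rmin_l del d). pose proof (Rmin_r del d).
  rewrite (Heq (x + h)), (Heq x) by (try rewrite Rminus_diag, Rabs_R0;
    try replace (x + h - x) with h by ring; lra).
  apply K; [exact Hh| lra].
Qed.

Lemma continuity_pt_agree_right f g c d : 0 < d -> continuity_pt f c -> continuity_pt g c ->
  (forall y, c < y < c + d -> f y = g y) -> f c = g c.
Proof.
  intros Hd Hf Hg Heq. apply NNPP. intros Hne.
  set (eta := Rabs (f c - g c) / 2).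
  assert (Heta : 0 < eta) by (unfold eta; pose proof (Rabs_pos_lt (f c - g c) ltac:(lra)); lra).
  destruct (continuity_pt_eps f c Hf eta Heta) as (d1 & Hd1 & K1).
  destruct (continuity_pt_eps g c Hg eta Heta) as (d2 & Hd2 & K2).
  set (y := c + Rmin d (Rmin d1 d2) / 2).
  pose proof (Rmin_l d (Rmin d1 d2)). pose proof (Rmin_r d (Rmin d1 d2)).
  pose proof (Rmin_l d1 d2). pose proof (Rmin_r d1 d2).
  assert (0 < Rmin d (Rmin d1 d2)) by (repeat apply Rmin_glb_lt; assumption).
  assert (Hy : Rabs (y - c) = Rmin d (Rmin d1 d2) / 2) by (unfold y; rewrite Rabs_right; lra).
  specialize (K1 y ltac:(lra)). specialize (K2 y ltac:(lra)).
  rewrite Heq in K1 by (unfold y; lra).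
  assert (Rabs (f c - g c) <= Rabs (g y - f c) + Rabs (g y - g c)).
  { replace (f c - g c) with (- (g y - f c) + (g y - g c)) by ring.
    rewrite <- (Rabs_Ropp (g y - f c)). apply Rabs_triang. }
  unfold eta in *; lra.
Qed.

Lemma derivative_of_even_odd f f' : (forall x, derivable_pt_lim f x (f' x)) ->
  (forall x, f (- x) = f x) -> forall x, f' (- x) = - f' x.
Proof.
  intros Hder Hev x.
  assert (H1 : derivable_pt_lim (fun y => f (- y)) x (f' (- x) * (-1))).
  { apply (derivable_pt_lim_comp Ropp f x (-1) (f' (- x))); [| apply Hder].
    exact (derivable_pt_lim_opp id x 1 (derivable_pt_lim_id x)). }
  assert (H2 : derivable_pt_lim (fun y => f (- y)) x (f' x)).
  { apply (derivable_pt_lim_local _ f x _ 1); [lra| intros; apply Hev| apply Hder]. }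
  pose proof (uniqueness_limite _ _ _ _ H1 H2). lra.
Qed.

Lemma apow_nonzero x p : x <> 0 -> apow x p = Rpower (Rabs x) p.
Proof.
  intros H; unfold apow; destruct (Rlt_dec 0 (Rabs x)) as [|n]; [reflexivity|].
  exfalso; apply n, Rabs_pos_lt, H.
Qed.

Lemma apow_0 p : apow 0 p = 0.
Proof. unfold apow; rewrite Rabs_R0; destruct (Rlt_dec 0 0); [lra| reflexivity]. Qed.

Record profile (beta Lam delta eps : R) (u u' : R -> R) : Prop := {
  prof_beta : 0 < beta < 2;
  prof_Lam : 0 < Lam;
  prof_delta : 0 < delta;
  prof_eps : 0 < eps;
  prof_eps_beta : eps < beta / 2;
  prof_deriv : forall x, derivable_pt_lim u x (u' x);
  prof_deriv_cont : continuity u';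
  prof_deriv_inside : forall x, Rabs x < 1 -> Rabs (u' x) <= Lam * apow x (beta + delta - 1);
  prof_even : forall x, u (- x) = u x;
  prof_outside : forall x, 1 <= Rabs x -> u x = Rpower (Rabs x) (beta - eps);
  prof_inside : forall x, Rabs x < 1 -> 0 <= u x <= Lam * apow x (beta + delta)
}.
Arguments prof_beta {beta Lam delta eps u u'}.
Arguments prof_Lam {beta Lam delta eps u u'}.
Arguments prof_delta {beta Lam delta eps u u'}.
Arguments prof_eps {beta Lam delta eps u u'}.
Arguments prof_eps_beta {beta Lam delta eps u u'}.
Arguments prof_deriv {beta Lam delta eps u u'}.
Arguments prof_deriv_cont {beta Lam delta eps u u'}.
Arguments prof_deriv_inside {beta Lam delta eps u u'}.
Arguments prof_even {beta Lam delta eps u u'}.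
Arguments prof_outside {beta Lam delta eps u u'}.
Arguments prof_inside {beta Lam delta eps u u'}.

Lemma profile_of_admissible beta Lam delta eps u :
  0 < beta < 2 -> 0 < Lam -> 0 < delta ->
  admissible beta Lam delta eps u -> exists u', profile beta Lam delta eps u u'.
Proof.
  intros Hb HL Hd (He & He2 & _ & (u' & H1 & H2 & H3) & H4 & H5 & H6).
  exists u'. constructor; assumption.
Qed.

Section ProfileFacts.
Context {beta Lam delta eps : R} {u u' : R -> R} (Hu : profile beta Lam delta eps u u').

Lemma u_zero : u 0 = 0.
Proof.
  destruct (prof_inside Hu 0) as [H1 H2]; [rewrite Rabs_R0; lra|].
  rewrite apow_0 in H2. lra.
Qed.

Lemma u_nonneg x : 0 <= u x.
Proof.
  destruct (Rlt_dec (Rabs x) 1); [apply (prof_inside Hu); assumption|].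
  rewrite (prof_outside Hu) by lra. left; apply Rpower_gt_0.
Qed.

Lemma u_continuity_pt x : continuity_pt u x.
Proof. apply derivable_continuous_pt. exists (u' x). apply (prof_deriv Hu). Qed.

Lemma u'_outside_pos x : 1 < x -> u' x = (beta - eps) * Rpower x (beta - eps - 1).
Proof.
  intros Hx. apply (uniqueness_limite u x); [apply (prof_deriv Hu)|].
  apply (derivable_pt_lim_local _ (fun y => Rpower y (beta - eps)) x _ (x - 1)); [lra| |].
  - intros y Hy. apply Rabs_def2 in Hy.
    rewrite (prof_outside Hu), Rabs_right; [reflexivity| |]; rewrite ?Rabs_right; lra.
  - apply derivable_pt_lim_power; lra.
Qed.

Lemma u'_one : u' 1 = beta - eps.
Proof.
  replace (beta - eps) with ((beta - eps) * Rpower 1 (beta - eps - 1))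
    by (rewrite Rpower_1_base; ring).
  apply (continuity_pt_agree_right u' (fun y => (beta - eps) * Rpower y (beta - eps - 1)) 1 1);
    [lra| apply (prof_deriv_cont Hu)| |].
  - apply continuity_pt_scal, Rpower_continuity_pt; lra.
  - intros y Hy. apply u'_outside_pos; lra.
Qed.

Lemma u'_outside x : 1 <= Rabs x -> Rabs (u' x) = (beta - eps) * Rpower (Rabs x) (beta - eps - 1).
Proof.
  intros Hx. pose proof (prof_beta Hu). pose proof (prof_eps_beta Hu).
  assert (Hpos : forall y, 1 <= y -> Rabs (u' y) = (beta - eps) * Rpower y (beta - eps - 1)).
  { intros y Hy. pose proof (Rpower_gt_0 y (beta - eps - 1)).
    destruct (Rle_lt_or_eq_dec 1 y Hy) as [Hl|<-].
    - rewrite u'_outside_pos, Rabs_right by (try apply Rle_ge; nra). reflexivity.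
    - rewrite u'_one, Rpower_1_base, Rabs_right by lra. ring. }
  destruct (Rle_dec 0 x).
  - rewrite (Rabs_right x) in * by lra. apply Hpos; assumption.
  - rewrite (Rabs_left x) in * by lra. rewrite <- (Ropp_involutive x) at 1.
    rewrite (derivative_of_even_odd u u' (prof_deriv Hu) (prof_even Hu)), Rabs_Ropp.
    apply Hpos; lra.
Qed.

Lemma u_le_power x e : beta - eps <= e <= beta + delta -> x <> 0 ->
  u x <= (Lam + 1) * Rpower (Rabs x) e.
Proof.
  intros He Hx. pose proof (Rabs_pos_lt x Hx). pose proof (Rpower_gt_0 (Rabs x) e).
  pose proof (prof_Lam Hu).
  destruct (Rlt_dec (Rabs x) 1).
  - destruct (prof_inside Hu x) as [_ Hh]; [assumption|]. rewrite apow_nonzero in Hh by exact Hx.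
    assert (Rpower (Rabs x) (beta + delta) <= Rpower (Rabs x) e) by (apply Rpower_le_exp_small; lra).
    nra.
  - rewrite (prof_outside Hu) by lra.
    assert (Rpower (Rabs x) (beta - eps) <= Rpower (Rabs x) e) by (apply Rle_Rpower; lra).
    nra.
Qed.

Lemma u'_le_power x e : beta - eps <= e <= beta + delta -> x <> 0 ->
  Rabs (u' x) <= (Lam + 2) * Rpower (Rabs x) (e - 1).
Proof.
  intros He Hx. pose proof (Rabs_pos_lt x Hx). pose proof (Rpower_gt_0 (Rabs x) (e - 1)).
  pose proof (prof_Lam Hu). pose proof (prof_beta Hu). pose proof (prof_eps_beta Hu).
  destruct (Rlt_dec (Rabs x) 1) as [Hlt|Hge].
  - pose proof (prof_deriv_inside Hu x Hlt) as Hd. rewrite apow_nonzero in Hd by exact Hx.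
    assert (Rpower (Rabs x) (beta + delta - 1) <= Rpower (Rabs x) (e - 1))
      by (apply Rpower_le_exp_small; lra).
    nra.
  - rewrite u'_outside by lra.
    assert (Rpower (Rabs x) (beta - eps - 1) <= Rpower (Rabs x) (e - 1)) by (apply Rle_Rpower; lra).
    pose proof (Rpower_gt_0 (Rabs x) (beta - eps - 1)). pose proof (prof_eps Hu). nra.
Qed.

Lemma u_lipschitz x y M : (forall c, Rmin x y <= c <= Rmax x y -> Rabs (u' c) <= M) ->
  Rabs (u y - u x) <= M * Rabs (y - x).
Proof.
  intros HM. destruct (MVT_abs u u' x y) as (c & Hc & Hcr); [intros; apply (prof_deriv Hu)|].
  rewrite Hc. apply Rmult_le_compat_r; [apply Rabs_pos| apply HM, Hcr].
Qed.

End ProfileFacts.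

(* The fractional Laplacian at 0.  Since u is even and u(0) = 0, the integrand
   of L u(0) at +h and at -h equals 2 u(h) h^-(1+beta); for h >= 1 this is
   2 h^(-1-eps), whose integral over [1, +oo) is 2/eps. *)

Definition lap_integrand (beta : R) (u : R -> R) (h : R) : R := 2 * u h * Rpower h (- (1 + beta)).

Section Laplacian.
Context {beta Lam delta eps : R} {u u' : R -> R} (Hu : profile beta Lam delta eps u u').

Lemma lap_integrand_cont : cont_pos (lap_integrand beta u).
Proof.
  apply cont_pos_of_continuity_pt; intros x Hx. unfold lap_integrand.
  apply continuity_pt_mult; [apply continuity_pt_mult|].
  - apply continuity_pt_const; intros ? ?; reflexivity.
  - apply (u_continuity_pt Hu).
  - apply Rpower_continuity_pt, Hx.
Qed.

Lemma lap_integrand_nonneg : nonneg_pos (lap_integrand beta u).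
Proof.
  intros x Hx; unfold lap_integrand. pose proof (u_nonneg Hu x).
  pose proof (Rpower_gt_0 x (- (1 + beta))). nra.
Qed.

Lemma lap_integrand_le_power h e : 0 < h -> beta - eps <= e <= beta + delta ->
  lap_integrand beta u h <= 2 * (Lam + 1) * Rpower h (e - (1 + beta)).
Proof.
  intros Hh He. unfold lap_integrand.
  pose proof (u_le_power Hu h e He ltac:(lra)) as Hb. rewrite Rabs_right in Hb by lra.
  pose proof (Rpower_gt_0 h (- (1 + beta))).
  replace (e - (1 + beta)) with (e + - (1 + beta)) by ring. rewrite Rpower_plus. nra.
Qed.

(* Integrability: exponent beta + delta near 0 and beta - eps at infinity. *)
Lemma lap_integrand_bounded : int_le_from (lap_integrand beta u) 0
  (2 * (Lam + 1) * Rpower 1 (beta + delta - (1 + beta) + 1) / (beta + delta - (1 + beta) + 1)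
   + 2 * (Lam + 1) * Rpower 1 (beta - eps - (1 + beta) + 1) / (- (beta - eps - (1 + beta) + 1))).
Proof.
  pose proof (prof_Lam Hu). pose proof (prof_delta Hu). pose proof (prof_eps Hu).
  pose proof (prof_beta Hu). pose proof (prof_eps_beta Hu).
  apply int_le_from_split with 1; [apply lap_integrand_cont| lra| lra| |].
  - apply int_le_on_compare with (fun h => 2 * (Lam + 1) * Rpower h (beta + delta - (1 + beta)));
      [apply lap_integrand_cont| apply cont_pos_scal, cont_pos_power| |apply int_le_on_power; lra].
    intros h Hh _. apply lap_integrand_le_power; lra.
  - apply int_le_from_compare with (fun h => 2 * (Lam + 1) * Rpower h (beta - eps - (1 + beta)));
      [apply lap_integrand_cont| apply cont_pos_scal, cont_pos_power| |apply int_le_from_power; lra].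
    intros h Hh _. apply lap_integrand_le_power; lra.
Qed.

(* The tail over [1, +oo) alone already contributes 2/eps. *)
Lemma lap_integral_lower : 2 / eps <= int_pos (lap_integrand beta u).
Proof.
  destruct (int_pos_spec _ _ lap_integrand_cont lap_integrand_nonneg lap_integrand_bounded)
    as (_ & _ & Hsup).
  set (I := int_pos (lap_integrand beta u)) in *.
  pose proof (prof_eps Hu) as He.
  apply Rnot_lt_le; intros Hlt.
  set (eta := (2 / eps - I) * eps / 4).
  assert (Heta : 0 < eta) by (unfold eta; apply Rmult_lt_0_compat; [apply Rmult_lt_0_compat|]; lra).
  assert (HI : 0 <= I) by (apply Rle_trans with (RInt (lap_integrand beta u) 1 1);
    [right; symmetry; exact (RInt_point 1 _)| apply Hsup; lra]).
  assert (Heta1 : eta < 1) by (unfold eta; assert (2 / eps * eps = 2) by (field; lra); nra).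
  set (b := Rpower (/ eta) (/ eps)).
  assert (Hb1 : 1 < b).
  { unfold b. rewrite <- (Rpower_O (/ eta)) by (apply Rinv_0_lt_compat; lra).
    apply Rpower_lt; [rewrite <- Rinv_1; apply Rinv_lt_contravar; lra|].
    apply Rinv_0_lt_compat; lra. }
  assert (Hbe : Rpower b (- eps) = eta).
  { unfold b. rewrite Rpower_mult. replace (/ eps * - eps) with (Ropp 1) by (field; lra).
    rewrite Rpower_Ropp, Rpower_1 by (apply Rinv_0_lt_compat; lra). apply Rinv_inv. }
  assert (Hint : RInt (lap_integrand beta u) 1 b = 2 * (1 - eta) / eps).
  { rewrite (RInt_ext _ (fun h => 2 * Rpower h (- 1 - eps))).
    2:{ intros x Hx. rewrite Rmin_left, Rmax_right in Hx by lra. unfold lap_integrand.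
        rewrite (prof_outside Hu), Rabs_right by (rewrite ?Rabs_right; lra).
        rewrite Rmult_assoc, <- Rpower_plus. f_equal. f_equal. ring. }
    rewrite RInt_scal_R by (apply ex_RInt_pos; [apply cont_pos_power| lra| lra]).
    rewrite RInt_power by lra. replace (-1 - eps + 1) with (- eps) by ring.
    rewrite Hbe, Rpower_1_base.
    assert (E : 2 * ((eta - 1) / - eps) = 2 * (1 - eta) / eps) by (field; lra). exact E. }
  assert (RInt (lap_integrand beta u) 1 b <= I) by (apply Hsup; lra).
  rewrite Hint in H. unfold eta in H.
  assert (2 * (1 - (2 / eps - I) * eps / 4) / eps = 2 / eps - (2 / eps - I) / 2) by (field; lra).
  lra.
Qed.

Lemma laplacian_lower_bound : exists L, frac_lap_at beta u 0 L /\ 4 * c_beta beta / eps <= L.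
Proof.
  destruct (int_pos_spec _ _ lap_integrand_cont lap_integrand_nonneg lap_integrand_bounded)
    as (Hconv & _ & _).
  pose proof lap_integral_lower as Hlow.
  pose proof (c_beta_pos beta (prof_beta Hu)) as Hc. pose proof (prof_eps Hu).
  set (I := int_pos (lap_integrand beta u)) in *.
  exists (c_beta beta * (I + I)). split.
  - exists (I + I). split; [| reflexivity].
    exists I, I. split; [| split; [| reflexivity]].
    + apply (ImpIntPos_ext (lap_integrand beta u)); [| exact Hconv]. intros h Hh.
      rewrite (u_zero Hu), Rplus_0_l, Rminus_0_l, (prof_even Hu), apow_nonzero, Rabs_right by lra.
      unfold lap_integrand. rewrite Rpower_Ropp. field. apply Rgt_not_eq, Rpower_gt_0.
    + apply (ImpIntPos_ext (lap_integrand beta u)); [| exact Hconv]. intros h Hh.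
      rewrite (u_zero Hu), Rplus_0_l, Rminus_0_l, Ropp_involutive, (prof_even Hu), apow_nonzero,
        Rabs_Ropp, Rabs_right by lra.
      unfold lap_integrand. rewrite Rpower_Ropp. field. apply Rgt_not_eq, Rpower_gt_0.
  - replace (4 * c_beta beta / eps) with (c_beta beta * (2 / eps + 2 / eps)) by (field; lra).
    apply Rmult_le_compat_l; lra.
Qed.

End Laplacian.

(* Pointwise bounds for the second difference
     D(s, h) = u(h + s) - u(h) - u(s)
   (the integrand of Gamma_2(u)(0), since u(0) = 0), in the three regimes
   h <= |s|/2, |s|/2 <= h <= 2|s| and 2|s| <= h.  Each bound holds with any
   exponent e in [beta - eps, beta + delta] (with e <= 2): this freedom is used
   to take e = beta - eps for large |s| and e close to beta for small |s|. *)

Definition diff2 (u : R -> R) (s h : R) : R := u (h + s) - u h - u s.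

Lemma sqr_diff_le a b : (a - b) ^ 2 <= 2 * a ^ 2 + 2 * b ^ 2.
Proof. pose proof (pow2_ge_0 (a + b)). nra. Qed.

Lemma sqr_diff3_le a b c : (a - b - c) ^ 2 <= 3 * (a ^ 2 + b ^ 2 + c ^ 2).
Proof. pose proof (pow2_ge_0 (a + b)). pose proof (pow2_ge_0 (a + c)). pose proof (pow2_ge_0 (b - c)). nra. Qed.

Section SecondDifference.
Context {beta Lam delta eps : R} {u u' : R -> R} (Hu : profile beta Lam delta eps u u').
Lemma u_increment e a t : beta - eps <= e <= beta + delta -> e <= 2 ->
  a <> 0 -> Rabs t <= Rabs a / 2 ->
  Rabs (u (a + t) - u a) <= 2 * (Lam + 2) * Rpower (Rabs a) (e - 1) * Rabs t.
Proof.
  intros He He2 Ha Ht. pose proof (Rabs_pos_lt a Ha). pose proof (prof_Lam Hu).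
  pose proof (prof_eps_beta Hu). pose proof (prof_beta Hu).
  replace (Rabs t) with (Rabs (a + t - a)) by (f_equal; ring).
  apply (u_lipschitz Hu). intros c Hc.
  assert (Hca : Rabs a / 2 <= Rabs c <= 3 * Rabs a / 2).
  { revert Ht Hc. unfold Rmin, Rmax, Rabs.
    destruct (Rle_dec a (a + t)), (Rcase_abs t), (Rcase_abs a), (Rcase_abs c); intros; lra. }
  assert (Hc0 : c <> 0) by (intro; subst; rewrite Rabs_R0 in Hca; lra).
  apply Rle_trans with ((Lam + 2) * Rpower (Rabs c) (e - 1)); [apply (u'_le_power Hu); assumption|].
  replace (2 * (Lam + 2) * Rpower (Rabs a) (e - 1)) with ((Lam + 2) * (2 * Rpower (Rabs a) (e - 1))) by ring.
  apply Rmult_le_compat_l; [lra| apply Rpower_comparable; lra].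
Qed.

Lemma u_sqr_le_power e x : beta - eps <= e <= beta + delta -> 0 < Rabs x -> u x ^ 2 <= (Lam + 1) ^ 2 * Rpower (Rabs x) (2 * e).
Proof.
  intros He Hx. rewrite <- Rpower_sqr, <- Rpow_mult_distr.
  apply pow_incr. split; [apply (u_nonneg Hu)|].
  apply (u_le_power Hu); [assumption|]. intros ->. rewrite Rabs_R0 in Hx. lra.
Qed.

Lemma diff2_small_h e s h : beta - eps <= e <= beta + delta -> e <= 2 -> s <> 0 -> 0 < h -> h <= Rabs s / 2 ->
  diff2 u s h ^ 2 <= 8 * (Lam + 2) ^ 2 * Rpower (Rabs s) (2 * e - 2) * h ^ 2
                     + 2 * (Lam + 1) ^ 2 * Rpower h (2 * e).
Proof.
  intros He He2 Hs Hh Hhs.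
  pose proof (u_increment e s h He He2 Hs ltac:(rewrite Rabs_right; lra)) as Hinc.
  rewrite (Rabs_right h), (Rplus_comm s h) in Hinc by lra.
  pose proof (u_sqr_le_power e h He ltac:(rewrite Rabs_right; lra)) as Hh2. rewrite (Rabs_right h) in Hh2 by lra.
  unfold diff2. replace (u (h + s) - u h - u s) with ((u (h + s) - u s) - u h) by ring.
  eapply Rle_trans; [apply sqr_diff_le|].
  apply (pow_maj_Rabs _ _ 2) in Hinc.
  replace (Rpower (Rabs s) (2 * e - 2)) with (Rpower (Rabs s) (e - 1) ^ 2)
    by (rewrite Rpower_sqr; f_equal; ring).
  nra.
Qed.

Lemma u_le_power_ball e y r : beta - eps <= e <= beta + delta -> e <= 2 -> 0 < r -> Rabs y <= 3 * r -> 0 <= u y <= 9 * (Lam + 1) * Rpower r e.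
Proof.
  intros He He2 Hr Hy. split; [apply (u_nonneg Hu)|].
  pose proof (prof_Lam Hu). pose proof (prof_beta Hu). pose proof (prof_eps_beta Hu).
  pose proof (Rpower_gt_0 r e).
  destruct (Req_dec y 0) as [->|Hy0]; [rewrite (u_zero Hu); nra|].
  apply Rle_trans with ((Lam + 1) * Rpower (Rabs y) e); [apply (u_le_power Hu); assumption|].
  pose proof (Rabs_pos_lt y Hy0).
  apply Rle_trans with ((Lam + 1) * Rpower (3 * r) e); [apply Rmult_le_compat_l; [lra| apply Rle_Rpower_l; lra]|].
  rewrite <- Rpower_mult_distr by lra.
  assert (Rpower 3 e <= 9) by (replace 9 with (Rpower 3 2) by (rewrite Rpower_2; lra); apply Rle_Rpower; lra).
  assert (Rpower 3 e * Rpower r e <= 9 * Rpower r e) by (apply Rmult_le_compat_r; lra).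
  nra.
Qed.

Lemma diff2_mid_h e s h : beta - eps <= e <= beta + delta -> e <= 2 -> s <> 0 -> 0 < h -> h <= 2 * Rabs s ->
  diff2 u s h ^ 2 <= 729 * (Lam + 1) ^ 2 * Rpower (Rabs s) (2 * e).
Proof.
  intros He He2 Hs Hh Hhs. pose proof (Rabs_pos_lt s Hs).
  assert (Hhs' : Rabs (h + s) <= 3 * Rabs s)
    by (pose proof (Rabs_triang h s); rewrite (Rabs_right h) in * by lra; lra).
  destruct (u_le_power_ball e (h + s) (Rabs s)) as [A1 A2]; [assumption..| lra|].
  destruct (u_le_power_ball e h (Rabs s)) as [B1 B2]; [assumption..| rewrite Rabs_right; lra|].
  destruct (u_le_power_ball e s (Rabs s)) as [C1 C2]; [assumption..| lra|].
  unfold diff2. eapply Rle_trans; [apply sqr_diff3_le|].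
  set (M := 9 * (Lam + 1) * Rpower (Rabs s) e) in *.
  assert (u (h + s) ^ 2 <= M ^ 2) by (apply pow_incr; lra).
  assert (u h ^ 2 <= M ^ 2) by (apply pow_incr; lra).
  assert (u s ^ 2 <= M ^ 2) by (apply pow_incr; lra).
  replace (729 * (Lam + 1) ^ 2 * Rpower (Rabs s) (2 * e)) with (9 * M ^ 2)
    by (unfold M; rewrite <- Rpower_sqr; ring).
  lra.
Qed.

Lemma diff2_large_h e e2 s h : beta - eps <= e <= beta + delta ->
  beta - eps <= e2 <= beta + delta -> e2 <= 2 -> s <> 0 -> 2 * Rabs s <= h ->
  diff2 u s h ^ 2 <= 8 * (Lam + 2) ^ 2 * Rpower (Rabs s) 2 * Rpower h (2 * e2 - 2)
                     + 2 * (Lam + 1) ^ 2 * Rpower (Rabs s) (2 * e).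
Proof.
  intros He He2 He2' Hs Hhs. pose proof (Rabs_pos_lt s Hs).
  assert (Hh : h <> 0) by lra.
  pose proof (u_increment e2 h s He2 He2' Hh ltac:(rewrite (Rabs_right h); lra)) as Hinc.
  rewrite (Rabs_right h) in Hinc by lra.
  pose proof (u_sqr_le_power e s He ltac:(lra)) as Hs2.
  unfold diff2. replace (u (h + s) - u h - u s) with ((u (h + s) - u h) - u s) by ring.
  eapply Rle_trans; [apply sqr_diff_le|].
  apply (pow_maj_Rabs _ _ 2) in Hinc.
  replace (Rpower h (2 * e2 - 2)) with (Rpower h (e2 - 1) ^ 2) by (rewrite Rpower_sqr; f_equal; ring).
  rewrite Rpower_2 by lra.
  nra.
Qed.

End SecondDifference.

Definition g2_integrand (beta : R) (u : R -> R) (s h : R) : R :=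
  diff2 u s h ^ 2 * Rpower h (- (1 + beta)) * Rpower (Rabs s) (- (1 + beta)).

Lemma Rpower_plus_eq r a b c : a + b = c -> Rpower r a * Rpower r b = Rpower r c.
Proof. intros <-; symmetry; apply Rpower_plus. Qed.

Lemma div_le_den c a b : 0 <= c -> 0 < a -> a <= b -> c / b <= c / a.
Proof. intros; unfold Rdiv; apply Rmult_le_compat_l; [assumption| apply Rinv_le_contravar; lra]. Qed.

Lemma g2_integrand_nonneg beta u s : nonneg_pos (g2_integrand beta u s).
Proof.
  intros x Hx; unfold g2_integrand. pose proof (Rpower_gt_0 x (- (1 + beta))).
  pose proof (Rpower_gt_0 (Rabs s) (- (1 + beta))). pose proof (pow2_ge_0 (diff2 u s x)).
  apply Rmult_le_pos; [apply Rmult_le_pos|]; lra.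
Qed.

Section InnerIntegral.
Context {beta Lam delta eps : R} {u u' : R -> R} (Hu : profile beta Lam delta eps u u').
Let p := 1 + beta.

Lemma g2_integrand_cont s : cont_pos (g2_integrand beta u s).
Proof.
  apply cont_pos_of_continuity_pt; intros x Hx. unfold g2_integrand, diff2.
  pose proof (u_continuity_pt Hu) as Hc.
  apply continuity_pt_mult; [apply continuity_pt_mult|].
  - apply (continuity_pt_comp (fun h => u (h + s) - u h - u s) (fun z => z ^ 2));
      [| apply derivable_continuous_pt, derivable_pt_pow].
    apply continuity_pt_minus; [apply continuity_pt_minus|].
    + apply (continuity_pt_comp (fun h => h + s) u); [| apply Hc].
      apply continuity_pt_plus; [apply continuity_pt_id| apply continuity_pt_const; intros ? ?; reflexivity].
    + apply Hc.
    + apply continuity_pt_const; intros ? ?; reflexivity.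
  - apply Rpower_continuity_pt, Hx.
  - apply continuity_pt_const; intros ? ?; reflexivity.
Qed.

Lemma g2_integrand_le s h X : 0 < h -> diff2 u s h ^ 2 <= X ->
  g2_integrand beta u s h <= X * Rpower h (- p) * Rpower (Rabs s) (- p).
Proof.
  intros Hh HX. unfold g2_integrand. fold p.
  pose proof (Rpower_gt_0 h (- p)). pose proof (Rpower_gt_0 (Rabs s) (- p)).
  apply Rmult_le_compat_r; [lra|]. apply Rmult_le_compat_r; lra.
Qed.

Lemma g2_head_bound s e y : s <> 0 -> beta - eps <= e <= beta + delta -> e <= 2 ->
  0 < y -> y <= Rabs s / 2 ->
  int_le_on (g2_integrand beta u s) 0 y
    (8 * (Lam + 2) ^ 2 * Rpower (Rabs s) (2 * e - 2) * Rpower (Rabs s) (- p) * Rpower y (2 - beta) / (2 - beta)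
     + 2 * (Lam + 1) ^ 2 * Rpower (Rabs s) (- p) * Rpower y (2 * e - beta) / (2 * e - beta)).
Proof.
  intros Hs He He2 Hy Hys. pose proof (prof_beta Hu). pose proof (prof_eps_beta Hu). pose proof (prof_eps Hu).
  pose proof (Rabs_pos_lt s Hs). set (r := Rabs s) in *.
  set (c1 := 8 * (Lam + 2) ^ 2 * Rpower r (2 * e - 2) * Rpower r (- p)).
  set (c2 := 2 * (Lam + 1) ^ 2 * Rpower r (- p)).
  assert (Hc1 : 0 <= c1) by (unfold c1; pose proof (Rpower_gt_0 r (2 * e - 2));
    pose proof (Rpower_gt_0 r (- p)); pose proof (pow2_ge_0 (Lam + 2)); apply Rmult_le_pos; [apply Rmult_le_pos|]; lra).
  assert (Hc2 : 0 <= c2) by (unfold c2; pose proof (Rpower_gt_0 r (- p));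
    pose proof (pow2_ge_0 (Lam + 1)); apply Rmult_le_pos; lra).
  replace (2 - beta) with (2 - p + 1) by (unfold p; ring).
  replace (2 * e - beta) with (2 * e - p + 1) by (unfold p; ring).
  apply int_le_on_compare with (fun h => c1 * Rpower h (2 - p) + c2 * Rpower h (2 * e - p)).
  - apply g2_integrand_cont.
  - apply cont_pos_plus; apply cont_pos_scal, cont_pos_power.
  - intros h Hh Hh2. eapply Rle_trans.
    { apply g2_integrand_le; [lra| apply (diff2_small_h Hu e); unfold r in *; auto; lra]. }
    fold r. unfold c1, c2. rewrite <- (Rpower_2 h) by lra.
    rewrite <- (Rpower_plus_eq h 2 (- p) (2 - p)), <- (Rpower_plus_eq h (2 * e) (- p) (2 * e - p)) by ring.
    right; ring.
  - apply int_le_on_plus; try (apply cont_pos_scal, cont_pos_power);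
      apply int_le_on_power; auto; unfold p; lra.
Qed.

Lemma g2_head_bound_half s e : s <> 0 -> beta - eps <= e <= beta + delta -> e <= 2 ->
  int_le_on (g2_integrand beta u s) 0 (Rabs s / 2)
    ((8 * (Lam + 2) ^ 2 / (2 - beta) + 2 * (Lam + 1) ^ 2 / (2 * e - beta))
     * Rpower (Rabs s) (2 * e - 1 - 2 * beta)).
Proof.
  intros Hs He He2. pose proof (prof_beta Hu). pose proof (prof_eps_beta Hu). pose proof (prof_Lam Hu).
  pose proof (Rabs_pos_lt s Hs).
  eapply int_le_on_weaken; [| apply (g2_head_bound s e); auto; lra].
  set (r := Rabs s) in *.
  assert (T : forall k, 0 <= k -> Rpower (r / 2) k <= Rpower r k) by (intros; apply Rle_Rpower_l; lra).
  pose proof (T (2 - beta) ltac:(lra)). pose proof (T (2 * e - beta) ltac:(lra)).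
  assert (E1 : Rpower r (2 * e - 2) * Rpower r (- p) * Rpower r (2 - beta) = Rpower r (2 * e - 1 - 2 * beta))
    by (rewrite <- !Rpower_plus; f_equal; unfold p; ring).
  assert (E2 : Rpower r (- p) * Rpower r (2 * e - beta) = Rpower r (2 * e - 1 - 2 * beta))
    by (apply Rpower_plus_eq; unfold p; ring).
  pose proof (Rpower_gt_0 r (2 * e - 2)). pose proof (Rpower_gt_0 r (- p)).
  assert (0 < / (2 - beta)) by (apply Rinv_0_lt_compat; lra).
  assert (0 < / (2 * e - beta)) by (apply Rinv_0_lt_compat; lra).
  pose proof (pow2_ge_0 (Lam + 2)). pose proof (pow2_ge_0 (Lam + 1)).
  unfold Rdiv. rewrite Rmult_plus_distr_r. apply Rplus_le_compat.
  - rewrite <- E1.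
    apply Rle_trans with (8 * (Lam + 2) ^ 2 * Rpower r (2 * e - 2) * Rpower r (- p) * Rpower r (2 - beta)
                          * / (2 - beta)); [| right; ring].
    apply Rmult_le_compat_r; [lra|].
    apply Rmult_le_compat_l; [repeat apply Rmult_le_pos; lra| assumption].
  - rewrite <- E2.
    apply Rle_trans with (2 * (Lam + 1) ^ 2 * Rpower r (- p) * Rpower r (2 * e - beta) * / (2 * e - beta));
      [| right; ring].
    apply Rmult_le_compat_r; [lra|].
    apply Rmult_le_compat_l; [repeat apply Rmult_le_pos; lra| assumption].
Qed.

Lemma g2_mid_bound s e : s <> 0 -> beta - eps <= e <= beta + delta -> e <= 2 ->
  int_le_on (g2_integrand beta u s) (Rabs s / 2) (2 * Rabs s)
    (2916 * (Lam + 1) ^ 2 / beta * Rpower (Rabs s) (2 * e - 1 - 2 * beta)).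
Proof.
  intros Hs He He2. pose proof (prof_beta Hu).
  pose proof (Rabs_pos_lt s Hs). set (r := Rabs s) in *.
  set (c := 729 * (Lam + 1) ^ 2 * Rpower r (2 * e) * Rpower r (- p)).
  assert (Hc : 0 <= c) by (unfold c; pose proof (Rpower_gt_0 r (2 * e)); pose proof (Rpower_gt_0 r (- p));
    pose proof (pow2_ge_0 (Lam + 1)); apply Rmult_le_pos; [apply Rmult_le_pos|]; lra).
  apply int_le_on_weaken with (c * Rpower (r / 2) (- p + 1) / (- (- p + 1))).
  2:{ apply int_le_on_compare with (fun h => c * Rpower h (- p)).
      - apply g2_integrand_cont.
      - apply cont_pos_scal, cont_pos_power.
      - intros h Hh Hh2. eapply Rle_trans.
        { apply g2_integrand_le; [lra| apply (diff2_mid_h Hu e); unfold r in *; auto; lra]. }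
        fold r. unfold c. right; ring.
      - apply int_le_on_of_from, int_le_from_power; auto; unfold p; lra. }
  replace (- p + 1) with (- beta) by (unfold p; ring). rewrite Ropp_involutive.
  assert (T : Rpower (r / 2) (- beta) <= 4 * Rpower r (- beta)) by (apply Rpower_half_nonpos; lra).
  apply Rle_trans with (c * (4 * Rpower r (- beta)) / beta).
  { unfold Rdiv. apply Rmult_le_compat_r; [left; apply Rinv_0_lt_compat; lra| apply Rmult_le_compat_l; auto]. }
  unfold c. right.
  replace (729 * (Lam + 1) ^ 2 * Rpower r (2 * e) * Rpower r (- p) * (4 * Rpower r (- beta)) / beta)
    with (2916 * (Lam + 1) ^ 2 / beta * (Rpower r (2 * e) * Rpower r (- p) * Rpower r (- beta))) by (field; lra).
  rewrite <- !Rpower_plus. do 2 f_equal. unfold p; ring.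
Qed.

Lemma g2_tail_bound s e e2 x0 : s <> 0 -> beta - eps <= e <= beta + delta ->
  beta - eps <= e2 <= beta + delta -> 2 * e2 < 2 + beta -> 2 * Rabs s <= x0 ->
  int_le_from (g2_integrand beta u s) x0
    (8 * (Lam + 2) ^ 2 / (2 + beta - 2 * e2) * Rpower (Rabs s) (2 - p) * Rpower x0 (2 * e2 - 2 - beta)
     + 2 * (Lam + 1) ^ 2 / beta * Rpower (Rabs s) (2 * e - p) * Rpower x0 (- beta)).
Proof.
  intros Hs He He2 He2' Hx0. pose proof (prof_beta Hu). pose proof (prof_eps_beta Hu).
  pose proof (Rabs_pos_lt s Hs). set (r := Rabs s) in *.
  set (c1 := 8 * (Lam + 2) ^ 2 * Rpower r 2 * Rpower r (- p)).
  set (c2 := 2 * (Lam + 1) ^ 2 * Rpower r (2 * e) * Rpower r (- p)).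
  assert (Hc1 : 0 <= c1) by (unfold c1; pose proof (Rpower_gt_0 r 2); pose proof (Rpower_gt_0 r (- p));
    pose proof (pow2_ge_0 (Lam + 2)); apply Rmult_le_pos; [apply Rmult_le_pos|]; lra).
  assert (Hc2 : 0 <= c2) by (unfold c2; pose proof (Rpower_gt_0 r (2 * e)); pose proof (Rpower_gt_0 r (- p));
    pose proof (pow2_ge_0 (Lam + 1)); apply Rmult_le_pos; [apply Rmult_le_pos|]; lra).
  apply int_le_from_weaken with
    (c1 * Rpower x0 (2 * e2 - 2 - p + 1) / (- (2 * e2 - 2 - p + 1)) + c2 * Rpower x0 (- p + 1) / (- (- p + 1))).
  2:{ apply int_le_from_compare with (fun h => c1 * Rpower h (2 * e2 - 2 - p) + c2 * Rpower h (- p)).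
      - apply g2_integrand_cont.
      - apply cont_pos_plus; apply cont_pos_scal, cont_pos_power.
      - intros h Hh Hh2. eapply Rle_trans.
        { apply g2_integrand_le; [lra| apply (diff2_large_h Hu e e2); unfold r in *; auto; lra]. }
        fold r. unfold c1, c2.
        rewrite <- (Rpower_plus_eq h (2 * e2 - 2) (- p) (2 * e2 - 2 - p)) by ring. right; ring.
      - apply int_le_from_plus; try (apply cont_pos_scal, cont_pos_power);
          apply int_le_from_power; auto; unfold p; lra. }
  right. replace (2 * e2 - 2 - p + 1) with (2 * e2 - 2 - beta) by (unfold p; ring).
  replace (- p + 1) with (- beta) by (unfold p; ring). unfold c1, c2.
  rewrite <- (Rpower_plus_eq r 2 (- p) (2 - p)), <- (Rpower_plus_eq r (2 * e) (- p) (2 * e - p)) by ring.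
  field. lra.
Qed.

End InnerIntegral.

(* Taking e = beta - eps gives decay |s|^(-1-2eps) as |s| -> oo, and taking
   e = q in (beta, beta + delta] gives integrability as s -> 0. *)

Definition inner_coef (beta Lam e : R) : R :=
  8 * (Lam + 2) ^ 2 / (2 - beta) + 2 * (Lam + 1) ^ 2 / (2 * e - beta)
  + 2918 * (Lam + 1) ^ 2 / beta + 8 * (Lam + 2) ^ 2 / (2 + beta - 2 * e).

(* A common bound for the two choices of exponent. *)
Definition inner_const (beta Lam q : R) : R :=
  16 * (Lam + 2) ^ 2 / (2 - beta) + 2922 * (Lam + 1) ^ 2 / beta + 8 * (Lam + 2) ^ 2 / (2 + beta - 2 * q).

Lemma inner_const_pos beta Lam q : 0 < beta < 2 -> 0 < Lam -> 2 * q < 2 + beta -> 0 < inner_const beta Lam q.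
Proof.
  intros Hb HL Hq. unfold inner_const.
  assert (0 < (Lam + 2) ^ 2) by (apply pow_lt; lra). assert (0 < (Lam + 1) ^ 2) by (apply pow_lt; lra).
  assert (0 < 16 * (Lam + 2) ^ 2 / (2 - beta)) by (apply Rdiv_lt_0_compat; lra).
  assert (0 < 2922 * (Lam + 1) ^ 2 / beta) by (apply Rdiv_lt_0_compat; lra).
  assert (0 < 8 * (Lam + 2) ^ 2 / (2 + beta - 2 * q)) by (apply Rdiv_lt_0_compat; lra).
  lra.
Qed.

Lemma inner_coef_le_const beta Lam e q : 0 < beta < 2 -> 0 < Lam ->
  beta / 2 <= 2 * e - beta -> e <= q -> 2 * q < 2 + beta -> (e <= beta \/ e = q) ->
  inner_coef beta Lam e <= inner_const beta Lam q.
Proof.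
  intros Hb HL He Heq Hq Hcase. unfold inner_coef, inner_const.
  assert (0 <= (Lam + 2) ^ 2) by apply pow2_ge_0. assert (0 <= (Lam + 1) ^ 2) by apply pow2_ge_0.
  assert (2 * (Lam + 1) ^ 2 / (2 * e - beta) <= 4 * (Lam + 1) ^ 2 / beta).
  { replace (4 * (Lam + 1) ^ 2 / beta) with (2 * (Lam + 1) ^ 2 / (beta / 2)) by (field; lra).
    apply div_le_den; lra. }
  assert (8 * (Lam + 2) ^ 2 / (2 + beta - 2 * e) <= 8 * (Lam + 2) ^ 2 / (2 - beta)
          + 8 * (Lam + 2) ^ 2 / (2 + beta - 2 * q)).
  { assert (0 <= 8 * (Lam + 2) ^ 2 / (2 - beta)) by (apply Rmult_le_pos; [lra| left; apply Rinv_0_lt_compat; lra]).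
    assert (0 <= 8 * (Lam + 2) ^ 2 / (2 + beta - 2 * q))
      by (apply Rmult_le_pos; [lra| left; apply Rinv_0_lt_compat; lra]).
    destruct Hcase as [Hle| ->]; [| lra].
    assert (8 * (Lam + 2) ^ 2 / (2 + beta - 2 * e) <= 8 * (Lam + 2) ^ 2 / (2 - beta))
      by (apply div_le_den; lra). lra. }
  replace (16 * (Lam + 2) ^ 2 / (2 - beta)) with (8 * (Lam + 2) ^ 2 / (2 - beta) + 8 * (Lam + 2) ^ 2 / (2 - beta))
    by (field; lra).
  replace (2922 * (Lam + 1) ^ 2 / beta) with (4 * (Lam + 1) ^ 2 / beta + 2918 * (Lam + 1) ^ 2 / beta)
    by (field; lra).
  lra.
Qed.

Section InnerBound.
Context {beta Lam delta eps : R} {u u' : R -> R} (Hu : profile beta Lam delta eps u u').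

Lemma g2_inner_bound s e : s <> 0 -> beta - eps <= e <= beta + delta -> 2 * e < 2 + beta ->
  int_le_from (g2_integrand beta u s) 0 (inner_coef beta Lam e * Rpower (Rabs s) (2 * e - 1 - 2 * beta)).
Proof.
  intros Hs He He2. pose proof (prof_beta Hu). pose proof (prof_eps_beta Hu). pose proof (prof_Lam Hu).
  pose proof (Rabs_pos_lt s Hs). pose proof (g2_integrand_cont Hu s) as Hc.
  eapply int_le_from_weaken;
    [| apply (int_le_from_split _ _ (Rabs s / 2)); [exact Hc| lra| lra| apply (g2_head_bound_half Hu s e); [assumption| assumption| lra]|]].
  2:{ apply (int_le_from_split _ _ (2 * Rabs s)); [exact Hc| lra| lra| apply (g2_mid_bound Hu s e); [assumption| assumption| lra]|].
      apply (g2_tail_bound Hu s e e); auto; lra. }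
  set (r := Rabs s) in *. set (R0 := Rpower r (2 * e - 1 - 2 * beta)).
  assert (Htail1 : Rpower r (2 - (1 + beta)) * Rpower (2 * r) (2 * e - 2 - beta) <= R0).
  { apply Rle_trans with (Rpower r (2 - (1 + beta)) * Rpower r (2 * e - 2 - beta)).
    - apply Rmult_le_compat_l; [left; apply Rpower_gt_0| apply Rpower_le_base_nonpos; lra].
    - right; apply Rpower_plus_eq; ring. }
  assert (Htail2 : Rpower r (2 * e - (1 + beta)) * Rpower (2 * r) (- beta) <= R0).
  { apply Rle_trans with (Rpower r (2 * e - (1 + beta)) * Rpower r (- beta)).
    - apply Rmult_le_compat_l; [left; apply Rpower_gt_0| apply Rpower_le_base_nonpos; lra].
    - right; apply Rpower_plus_eq; ring. }
  assert (P1 : 0 <= 8 * (Lam + 2) ^ 2 / (2 + beta - 2 * e))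
    by (apply Rmult_le_pos; [pose proof (pow2_ge_0 (Lam + 2)); lra| left; apply Rinv_0_lt_compat; lra]).
  assert (P2 : 0 <= 2 * (Lam + 1) ^ 2 / beta)
    by (apply Rmult_le_pos; [pose proof (pow2_ge_0 (Lam + 1)); lra| left; apply Rinv_0_lt_compat; lra]).
  unfold inner_coef.
  replace (2918 * (Lam + 1) ^ 2 / beta) with (2916 * (Lam + 1) ^ 2 / beta + 2 * (Lam + 1) ^ 2 / beta)
    by (field; lra).
  rewrite !Rmult_assoc. nra.
Qed.

End InnerBound.

(* Continuity in s of the inner integral s |-> int_0^oo g2(s, h) dh away from
   s = 0: on a compact h-interval this follows from uniform continuity of the
   integrand in (h, s); the two tails are small uniformly for s near s0 by the
   head and tail bounds. *)

Lemma continuity_2d_pt_fst g x y : continuity_pt g x -> continuity_2d_pt (fun a b => g a) x y.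
Proof.
  intros Hg e. destruct (continuity_pt_eps g x Hg e (cond_pos e)) as (d & Hd & K).
  exists (mkposreal d Hd). intros a b Ha Hb. apply K, Ha.
Qed.

Lemma continuity_2d_pt_snd g x y : continuity_pt g y -> continuity_2d_pt (fun a b => g b) x y.
Proof.
  intros Hg e. destruct (continuity_pt_eps g y Hg e (cond_pos e)) as (d & Hd & K).
  exists (mkposreal d Hd). intros a b Ha Hb. apply K, Hb.
Qed.

Lemma continuity_2d_pt_sum g x y : continuity_pt g (x + y) -> continuity_2d_pt (fun a b => g (a + b)) x y.
Proof.
  intros Hg e. destruct (continuity_pt_eps g (x + y) Hg e (cond_pos e)) as (d & Hd & K).
  assert (Hd2 : 0 < d / 2) by lra.
  exists (mkposreal _ Hd2). intros a b Ha Hb. simpl in *. apply K.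
  replace (a + b - (x + y)) with ((a - x) + (b - y)) by ring.
  pose proof (Rabs_triang (a - x) (b - y)). lra.
Qed.

Lemma near_comparable s0 s : s0 <> 0 -> Rabs (s - s0) < Rabs s0 / 2 ->
  s <> 0 /\ Rabs s0 / 2 <= Rabs s <= 2 * Rabs s0.
Proof.
  intros Hs0 Hs. revert Hs. unfold Rabs.
  destruct (Rcase_abs (s - s0)), (Rcase_abs s0), (Rcase_abs s); intros; split; lra.
Qed.

(* A bound for |s|^k valid for all s near s0, whatever the sign of k. *)
Definition near_bound (s0 k : R) : R := Rpower (Rabs s0 / 2) k + Rpower (2 * Rabs s0) k.

Lemma near_bound_pos s0 k : 0 < near_bound s0 k.
Proof. unfold near_bound. pose proof (Rpower_gt_0 (Rabs s0 / 2) k). pose proof (Rpower_gt_0 (2 * Rabs s0) k). lra. Qed.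

Lemma Rpower_near s0 s k : s0 <> 0 -> Rabs (s - s0) < Rabs s0 / 2 -> Rpower (Rabs s) k <= near_bound s0 k.
Proof.
  intros Hs0 Hs. destruct (near_comparable s0 s Hs0 Hs) as [_ Hr].
  pose proof (Rabs_pos_lt s0 Hs0). apply Rpower_le_ends; lra.
Qed.

Section InnerContinuity.
Context {beta Lam delta eps : R} {u u' : R -> R} (Hu : profile beta Lam delta eps u u').
Let p := 1 + beta.
Let al := beta - eps.

Lemma g2_integrand_cont2d h s0 : 0 < h -> s0 <> 0 -> continuity_2d_pt (fun h s => g2_integrand beta u s h) h s0.
Proof.
  intros Hh Hs0. pose proof (u_continuity_pt Hu) as Hc.
  apply continuity_2d_pt_ext with (fun a b => ((u (a + b) - u a - u b) * (u (a + b) - u a - u b))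
     * Rpower a (- (1 + beta)) * Rpower (Rabs b) (- (1 + beta))).
  { intros; unfold g2_integrand, diff2; ring. }
  assert (HD : continuity_2d_pt (fun a b => u (a + b) - u a - u b) h s0).
  { apply continuity_2d_pt_minus; [apply continuity_2d_pt_minus|].
    - apply continuity_2d_pt_sum, Hc.
    - apply continuity_2d_pt_fst, Hc.
    - apply continuity_2d_pt_snd, Hc. }
  apply continuity_2d_pt_mult; [apply continuity_2d_pt_mult|].
  - apply continuity_2d_pt_mult; assumption.
  - apply continuity_2d_pt_fst, Rpower_continuity_pt, Hh.
  - apply (continuity_2d_pt_snd (fun b => Rpower (Rabs b) (- (1 + beta)))).
    apply (continuity_pt_comp Rabs (fun z => Rpower z (- (1 + beta)))); [apply Rcontinuity_abs|].
    apply Rpower_continuity_pt, Rabs_pos_lt, Hs0.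
Qed.

Lemma g2_compact_integral_cont s0 a b : s0 <> 0 -> 0 < a -> a <= b -> forall t, 0 < t ->
  exists d, 0 < d /\ forall s, Rabs (s - s0) < d ->
    Rabs (RInt (g2_integrand beta u s) a b - RInt (g2_integrand beta u s0) a b) <= t.
Proof.
  intros Hs0 Ha Hab t Ht.
  assert (Ht' : 0 < t / (b - a + 1)) by (apply Rdiv_lt_0_compat; lra).
  destruct (uniform_continuity_2d_1d (fun h s => g2_integrand beta u s h) a b s0) with (mkposreal _ Ht')
    as [d K]; [intros x Hx; apply g2_integrand_cont2d; lra|].
  pose proof (Rabs_pos_lt s0 Hs0).
  assert (Hd : 0 < Rmin d (Rabs s0 / 2)) by (apply Rmin_glb_lt; [apply cond_pos| lra]).
  exists (Rmin d (Rabs s0 / 2)). split; [exact Hd|]. intros s Hs.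
  pose proof (Rmin_l d (Rabs s0 / 2)). pose proof (Rmin_r d (Rabs s0 / 2)).
  assert (E1 : ex_RInt (g2_integrand beta u s) a b) by (apply ex_RInt_pos; auto; apply (g2_integrand_cont Hu)).
  assert (E2 : ex_RInt (g2_integrand beta u s0) a b) by (apply ex_RInt_pos; auto; apply (g2_integrand_cont Hu)).
  assert (Hm := RInt_minus (g2_integrand beta u s) (g2_integrand beta u s0) a b E1 E2).
  change (RInt (fun x => g2_integrand beta u s x - g2_integrand beta u s0 x) a b
          = RInt (g2_integrand beta u s) a b - RInt (g2_integrand beta u s0) a b) in Hm.
  rewrite <- Hm.
  apply Rle_trans with ((b - a) * (t / (b - a + 1))).
  - apply abs_RInt_le_const; [exact Hab| apply (ex_RInt_minus (V := R_NormedModule)); assumption|].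
    intros x Hx. left. assert (Hsd : Rabs (s - s0) < d) by lra. apply Rabs_def2 in Hsd.
    apply (K x s0 x s); try lra. rewrite Rminus_diag, Rabs_R0. apply cond_pos.
  - apply Rle_trans with ((b - a + 1) * (t / (b - a + 1))); [apply Rmult_le_compat_r; lra| right; field; lra].
Qed.

Lemma g2_head_near s0 s y : s0 <> 0 -> Rabs (s - s0) < Rabs s0 / 2 -> 0 < y -> y <= Rabs s0 / 4 ->
  int_le_on (g2_integrand beta u s) 0 y
    (8 * (Lam + 2) ^ 2 * near_bound s0 (2 * al - 2) * near_bound s0 (- p) * Rpower y (2 - beta) / (2 - beta)
     + 2 * (Lam + 1) ^ 2 * near_bound s0 (- p) * Rpower y (2 * al - beta) / (2 * al - beta)).
Proof.
  intros Hs0 Hs Hy Hy0. pose proof (prof_beta Hu). pose proof (prof_eps_beta Hu). pose proof (prof_eps Hu).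
  pose proof (prof_Lam Hu). pose proof (prof_delta Hu).
  destruct (near_comparable s0 s Hs0 Hs) as [Hsn Hsr].
  eapply int_le_on_weaken; [| apply (g2_head_bound Hu s al y); unfold al in *; auto; lra].
  pose proof (Rpower_near s0 s (2 * al - 2) Hs0 Hs). pose proof (Rpower_near s0 s (- p) Hs0 Hs).
  pose proof (Rpower_gt_0 (Rabs s) (2 * al - 2)). pose proof (Rpower_gt_0 (Rabs s) (- p)).
  pose proof (Rpower_gt_0 y (2 - beta)). pose proof (Rpower_gt_0 y (2 * al - beta)).
  assert (0 < / (2 - beta)) by (apply Rinv_0_lt_compat; lra).
  assert (0 < / (2 * al - beta)) by (apply Rinv_0_lt_compat; unfold al; lra).
  pose proof (pow2_ge_0 (Lam + 2)). pose proof (pow2_ge_0 (Lam + 1)).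
  unfold p in *. unfold Rdiv. apply Rplus_le_compat; apply Rmult_le_compat_r; try lra; apply Rmult_le_compat_r; try lra.
  - apply Rmult_le_compat; [repeat apply Rmult_le_pos; lra| lra| apply Rmult_le_compat_l; lra| assumption].
  - apply Rmult_le_compat_l; [lra| assumption].
Qed.

Lemma g2_tail_near s0 s N : s0 <> 0 -> Rabs (s - s0) < Rabs s0 / 2 -> 4 * Rabs s0 <= N ->
  int_le_from (g2_integrand beta u s) N
    (8 * (Lam + 2) ^ 2 / (2 + beta - 2 * al) * near_bound s0 (2 - p) * Rpower N (2 * al - 2 - beta)
     + 2 * (Lam + 1) ^ 2 / beta * near_bound s0 (2 * al - p) * Rpower N (- beta)).
Proof.
  intros Hs0 Hs HN. pose proof (prof_beta Hu). pose proof (prof_eps_beta Hu). pose proof (prof_eps Hu).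
  pose proof (prof_Lam Hu). pose proof (prof_delta Hu).
  destruct (near_comparable s0 s Hs0 Hs) as [Hsn Hsr].
  eapply int_le_from_weaken; [| apply (g2_tail_bound Hu s al al N); unfold al in *; auto; lra].
  pose proof (Rpower_near s0 s (2 - p) Hs0 Hs). pose proof (Rpower_near s0 s (2 * al - p) Hs0 Hs).
  pose proof (Rpower_gt_0 N (2 * al - 2 - beta)). pose proof (Rpower_gt_0 N (- beta)).
  assert (0 < / (2 + beta - 2 * al)) by (apply Rinv_0_lt_compat; unfold al; lra).
  assert (0 < / beta) by (apply Rinv_0_lt_compat; lra).
  pose proof (pow2_ge_0 (Lam + 2)). pose proof (pow2_ge_0 (Lam + 1)).
  unfold p in *. unfold Rdiv. apply Rplus_le_compat; apply Rmult_le_compat_r; try lra;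
    apply Rmult_le_compat_l; try assumption; repeat apply Rmult_le_pos; lra.
Qed.

Lemma g2_head_uniform s0 t : s0 <> 0 -> 0 < t ->
  exists y, 0 < y <= Rabs s0 / 4 /\
    forall s, Rabs (s - s0) < Rabs s0 / 2 -> int_le_on (g2_integrand beta u s) 0 y t.
Proof.
  intros Hs0 Ht. pose proof (prof_beta Hu). pose proof (prof_eps_beta Hu). pose proof (prof_eps Hu).
  pose proof (prof_Lam Hu). pose proof (Rabs_pos_lt s0 Hs0).
  pose proof (near_bound_pos s0 (2 * al - 2)). pose proof (near_bound_pos s0 (- p)).
  pose proof (pow2_ge_0 (Lam + 2)). pose proof (pow2_ge_0 (Lam + 1)).
  assert (0 < / (2 - beta)) by (apply Rinv_0_lt_compat; lra).
  assert (0 < / (2 * al - beta)) by (apply Rinv_0_lt_compat; unfold al; lra).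
  destruct (Rpower_small_near_0 (8 * (Lam + 2) ^ 2 * near_bound s0 (2 * al - 2) * near_bound s0 (- p) / (2 - beta))
              (2 - beta) (t / 2) (Rabs s0 / 4)) as (y1 & Hy1 & Ky1);
    [unfold Rdiv; repeat apply Rmult_le_pos; lra| lra..|].
  destruct (Rpower_small_near_0 (2 * (Lam + 1) ^ 2 * near_bound s0 (- p) / (2 * al - beta))
              (2 * al - beta) (t / 2) y1) as (y & Hy & Ky);
    [unfold Rdiv; repeat apply Rmult_le_pos; lra| unfold al; lra| lra..|].
  exists y. split; [lra|]. intros s Hs.
  eapply int_le_on_weaken; [| apply (g2_head_near s0 s y); auto; lra].
  specialize (Ky1 y ltac:(lra)). specialize (Ky y ltac:(lra)). unfold Rdiv in *. lra.
Qed.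

Lemma g2_tail_uniform s0 t y0 : s0 <> 0 -> 0 < t ->
  exists N, y0 <= N /\ 4 * Rabs s0 <= N /\
    forall s, Rabs (s - s0) < Rabs s0 / 2 -> int_le_from (g2_integrand beta u s) N t.
Proof.
  intros Hs0 Ht. pose proof (prof_beta Hu). pose proof (prof_eps_beta Hu). pose proof (prof_eps Hu).
  pose proof (prof_Lam Hu). pose proof (near_bound_pos s0 (2 - p)). pose proof (near_bound_pos s0 (2 * al - p)).
  pose proof (pow2_ge_0 (Lam + 2)). pose proof (pow2_ge_0 (Lam + 1)).
  assert (0 < / (2 + beta - 2 * al)) by (apply Rinv_0_lt_compat; unfold al; lra).
  assert (0 < / beta) by (apply Rinv_0_lt_compat; lra).
  destruct (Rpower_small_near_infty (8 * (Lam + 2) ^ 2 / (2 + beta - 2 * al) * near_bound s0 (2 - p))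
              (2 + beta - 2 * al) (t / 2) (Rmax y0 (4 * Rabs s0))) as (N1 & HN1 & _ & KN1);
    [unfold Rdiv; repeat apply Rmult_le_pos; lra| unfold al; lra| lra|].
  destruct (Rpower_small_near_infty (2 * (Lam + 1) ^ 2 / beta * near_bound s0 (2 * al - p)) beta (t / 2) N1)
    as (N & HN & _ & KN); [unfold Rdiv; repeat apply Rmult_le_pos; lra| lra| lra|].
  pose proof (Rmax_l y0 (4 * Rabs s0)). pose proof (Rmax_r y0 (4 * Rabs s0)).
  exists N. split; [lra| split; [lra|]]. intros s Hs.
  eapply int_le_from_weaken; [| apply (g2_tail_near s0 s N); auto; lra].
  specialize (KN1 N ltac:(lra)). specialize (KN N ltac:(lra)).
  replace (- (2 + beta - 2 * al)) with (2 * al - 2 - beta) in KN1 by ring. lra.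
Qed.

Lemma inner_integral_cont s0 : s0 <> 0 -> continuity_pt (fun s => int_pos (g2_integrand beta u s)) s0.
Proof.
  intros Hs0. pose proof (Rabs_pos_lt s0 Hs0) as Hr0.
  apply continuity_pt_of_eps. intros e0 He0. set (t := e0 / 4).
  destruct (g2_head_uniform s0 t Hs0 ltac:(unfold t; lra)) as (y & Hy & Khead).
  destruct (g2_tail_uniform s0 t y Hs0 ltac:(unfold t; lra)) as (N & HyN & HN & Ktail).
  assert (Key : forall s, Rabs (s - s0) < Rabs s0 / 2 ->
     RInt (g2_integrand beta u s) y N <= int_pos (g2_integrand beta u s)
       <= t + (RInt (g2_integrand beta u s) y N + t)).
  { intros s Hs. destruct (near_comparable s0 s Hs0 Hs) as [Hsn _].
    pose proof (g2_integrand_cont Hu s) as Hc. pose proof (g2_integrand_nonneg beta u s) as Hn.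
    assert (HB : int_le_from (g2_integrand beta u s) 0 (t + (RInt (g2_integrand beta u s) y N + t))).
    { apply int_le_from_split with y; [exact Hc| lra| lra| apply Khead, Hs|].
      apply int_le_from_split with N; [exact Hc| lra| lra| |apply Ktail, Hs].
      intros a b Ha Hya Hab HbN. apply RInt_pos_enlarge; auto; lra. }
    destruct (int_pos_spec _ _ Hc Hn HB) as (_ & U1 & U2). split; [apply U2; lra| exact U1]. }
  destruct (g2_compact_integral_cont s0 y N Hs0 ltac:(lra) ltac:(lra) t ltac:(unfold t; lra))
    as (d & Hd & Kd).
  exists (Rmin d (Rabs s0 / 2)). split; [apply Rmin_glb_lt; lra|].
  intros s Hs. pose proof (Rmin_l d (Rabs s0 / 2)). pose proof (Rmin_r d (Rabs s0 / 2)).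
  destruct (Key s ltac:(lra)) as [K1 K2].
  destruct (Key s0 ltac:(rewrite Rminus_diag, Rabs_R0; lra)) as [K3 K4].
  specialize (Kd s ltac:(lra)). revert Kd. unfold Rabs at 1.
  destruct (Rcase_abs _); intros Kd; apply Rabs_def1; unfold t in *; lra.
Qed.

End InnerContinuity.

(* With F(s) = int_0^oo g2(s,h) dh + int_0^oo g2(-s,h) dh
   (the inner integral of Gamma_2(u)(0) over h in R, split at 0), the bounds
   F(s) <= 2K |s|^(2q-1-2beta) for |s| < 1/2 and F(s) <= 2K |s|^(-1-2eps) for
   |s| >= 1/2 give int_0^oo F <= 2K/(2q - 2beta) + 2K/eps. Positivity comes
   from u(h + s) <> u(h) + u(s) for h, s > 1 (since beta - eps <> 1). *)

Definition inner_integral (beta : R) (u : R -> R) (s : R) : R := int_pos (g2_integrand beta u s).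

Definition outer_integrand (beta : R) (u : R -> R) (s : R) : R :=
  inner_integral beta u s + inner_integral beta u (- s).

Section OuterIntegral.
Context {beta Lam delta eps : R} {u u' : R -> R} (Hu : profile beta Lam delta eps u u').
Hypothesis Heps_quarter : eps <= beta / 4.
Variable q : R.
Hypothesis Hq : beta < q <= beta + delta.
Hypothesis Hq2 : 2 * q < 2 + beta.
Let K := inner_const beta Lam q.

Lemma inner_integral_spec s : s <> 0 ->
  ImpIntPos (g2_integrand beta u s) (inner_integral beta u s) /\
  (1 / 2 <= Rabs s -> inner_integral beta u s <= K * Rpower (Rabs s) (- 1 - 2 * eps)) /\
  (Rabs s < 1 / 2 -> inner_integral beta u s <= K * Rpower (Rabs s) (2 * q - 1 - 2 * beta)) /\
  (forall a b, 0 < a -> a <= b -> RInt (g2_integrand beta u s) a b <= inner_integral beta u s).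
Proof.
  intros Hs. pose proof (prof_beta Hu). pose proof (prof_eps Hu). pose proof (prof_Lam Hu).
  pose proof (prof_delta Hu). pose proof (Rpower_gt_0 (Rabs s) (- 1 - 2 * eps)).
  pose proof (Rpower_gt_0 (Rabs s) (2 * q - 1 - 2 * beta)).
  pose proof (g2_integrand_cont Hu s) as Hc. pose proof (g2_integrand_nonneg beta u s) as Hn.
  unfold inner_integral.
  destruct (Rle_dec (1 / 2) (Rabs s)) as [Hbig|Hsmall].
  - assert (Hcoef : inner_coef beta Lam (beta - eps) <= K)
      by (apply inner_coef_le_const; lra).
    destruct (int_pos_spec _ _ Hc Hn (g2_inner_bound Hu s (beta - eps) Hs ltac:(lra) ltac:(lra)))
      as (A & B & C).
    replace (2 * (beta - eps) - 1 - 2 * beta) with (- 1 - 2 * eps) in B by ring.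
    repeat split; auto; [| intros; lra]. intros _. nra.
  - assert (Hcoef : inner_coef beta Lam q <= K) by (apply inner_coef_le_const; lra).
    destruct (int_pos_spec _ _ Hc Hn (g2_inner_bound Hu s q Hs ltac:(lra) ltac:(lra))) as (A & B & C).
    repeat split; auto; [intros; lra|]. intros _. nra.
Qed.

Lemma inner_integral_nonneg s : s <> 0 -> 0 <= inner_integral beta u s.
Proof.
  intros Hs. destruct (inner_integral_spec s Hs) as (_ & _ & _ & C).
  apply Rle_trans with (RInt (g2_integrand beta u s) 1 1);
    [right; symmetry; exact (RInt_point 1 _)| apply C; lra].
Qed.

Lemma outer_integrand_cont : cont_pos (outer_integrand beta u).
Proof.
  apply cont_pos_of_continuity_pt. intros x Hx. unfold outer_integrand.
  apply continuity_pt_plus; [apply (inner_integral_cont Hu); lra|].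
  apply (continuity_pt_comp Ropp (inner_integral beta u));
    [apply continuity_pt_opp, continuity_pt_id| apply (inner_integral_cont Hu); lra].
Qed.

Lemma outer_integrand_nonneg : nonneg_pos (outer_integrand beta u).
Proof.
  intros x Hx. unfold outer_integrand.
  pose proof (inner_integral_nonneg x ltac:(lra)). pose proof (inner_integral_nonneg (- x) ltac:(lra)). lra.
Qed.

Lemma outer_integrand_bounded : 2 * eps <= 1 -> int_le_from (outer_integrand beta u) 0 (2 * K / (2 * q - 2 * beta) + 2 * K / eps).
Proof.
  intros Heps_half. pose proof (prof_beta Hu). pose proof (prof_eps Hu). pose proof (prof_Lam Hu).
  assert (HK : 0 < K) by (apply inner_const_pos; lra).
  apply int_le_from_split with (1 / 2); [apply outer_integrand_cont| lra| lra| |].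
  - apply int_le_on_weaken with (2 * K * Rpower (1 / 2) (2 * q - 1 - 2 * beta + 1) / (2 * q - 1 - 2 * beta + 1)).
    + replace (2 * q - 1 - 2 * beta + 1) with (2 * q - 2 * beta) by ring.
      assert (Rpower (1 / 2) (2 * q - 2 * beta) <= 1).
      { pose proof (Rpower_le_exp_small (1 / 2) 0 (2 * q - 2 * beta) ltac:(lra) ltac:(lra) ltac:(lra)) as E.
        rewrite Rpower_O in E by lra. exact E. }
      apply Rmult_le_compat_r; [left; apply Rinv_0_lt_compat; lra|].
      rewrite <- (Rmult_1_r (2 * K)) at 2. apply Rmult_le_compat_l; lra.
    + apply int_le_on_compare with (fun h => 2 * K * Rpower h (2 * q - 1 - 2 * beta));
        [apply outer_integrand_cont| apply cont_pos_scal, cont_pos_power| |apply int_le_on_power; lra].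
      intros h Hh Hh2. unfold outer_integrand.
      destruct (inner_integral_spec h ltac:(lra)) as (_ & _ & A & _).
      destruct (inner_integral_spec (- h) ltac:(lra)) as (_ & _ & B & _).
      rewrite Rabs_Ropp in B. rewrite Rabs_right in A, B by lra.
      specialize (A ltac:(lra)). specialize (B ltac:(lra)). lra.
  - apply int_le_from_weaken with (2 * K * Rpower (1 / 2) (- 1 - 2 * eps + 1) / (- (- 1 - 2 * eps + 1))).
    + replace (- 1 - 2 * eps + 1) with (- (2 * eps)) by ring. rewrite Ropp_involutive.
      assert (Rpower (1 / 2) (- (2 * eps)) <= 2).
      { replace (1 / 2) with (/ 2) by field. rewrite Rpower_inv_base, Ropp_involutive by lra.
        apply Rle_trans with (Rpower 2 1); [apply Rle_Rpower; lra| rewrite Rpower_1; lra]. }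
      apply Rle_trans with (2 * K * 2 / (2 * eps)); [| right; field; lra].
      apply Rmult_le_compat_r; [left; apply Rinv_0_lt_compat; lra| apply Rmult_le_compat_l; lra].
    + apply int_le_from_compare with (fun h => 2 * K * Rpower h (- 1 - 2 * eps));
        [apply outer_integrand_cont| apply cont_pos_scal, cont_pos_power| |apply int_le_from_power; lra].
      intros h Hh Hh2. unfold outer_integrand.
      destruct (inner_integral_spec h ltac:(lra)) as (_ & A & _ & _).
      destruct (inner_integral_spec (- h) ltac:(lra)) as (_ & B & _ & _).
      rewrite Rabs_Ropp in B. rewrite Rabs_right in A, B by lra.
      specialize (A ltac:(lra)). specialize (B ltac:(lra)). lra.
Qed.

Lemma g2_integrand_pos s h : beta - eps <> 1 -> 1 < s -> 1 < h -> 0 < g2_integrand beta u s h.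
Proof.
  intros Hnot_linear Hs Hh. pose proof (prof_beta Hu). pose proof (prof_eps_beta Hu).
  assert (HD : diff2 u s h <> 0).
  { unfold diff2. rewrite !(prof_outside Hu) by (rewrite Rabs_right; lra).
    rewrite !Rabs_right by lra.
    pose proof (Rpower_not_additive h s (beta - eps) ltac:(lra) ltac:(lra) ltac:(lra) Hnot_linear). lra. }
  unfold g2_integrand. pose proof (pow2_gt_0 _ HD).
  pose proof (Rpower_gt_0 h (- (1 + beta))). pose proof (Rpower_gt_0 (Rabs s) (- (1 + beta))).
  apply Rmult_lt_0_compat; [apply Rmult_lt_0_compat|]; assumption.
Qed.

Lemma outer_integrand_pos s : beta - eps <> 1 -> 1 < s -> 0 < outer_integrand beta u s.
Proof.
  intros Hnot_linear Hs. unfold outer_integrand.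
  destruct (inner_integral_spec s ltac:(lra)) as (_ & _ & _ & C).
  pose proof (inner_integral_nonneg (- s) ltac:(lra)).
  assert (0 < RInt (g2_integrand beta u s) 1 2).
  { apply RInt_gt_0; [lra| intros; apply g2_integrand_pos; [exact Hnot_linear| lra| lra]|].
    intros; apply (g2_integrand_cont Hu); lra. }
  assert (RInt (g2_integrand beta u s) 1 2 <= inner_integral beta u s) by (apply C; lra). lra.
Qed.

Lemma gamma2_integrand_pos_h s h : s <> 0 -> 0 < h ->
  (u (0 + h + s) - u (0 + h) - u (0 + s) + u 0) ^ 2 / (apow h (1 + beta) * apow s (1 + beta))
  = g2_integrand beta u s h.
Proof.
  intros Hs Hh. rewrite !Rplus_0_l, (u_zero Hu), Rplus_0_r.
  rewrite !apow_nonzero, (Rabs_right h) by lra.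
  unfold g2_integrand, diff2. rewrite !Rpower_Ropp.
  pose proof (Rpower_gt_0 h (1 + beta)). pose proof (Rpower_gt_0 (Rabs s) (1 + beta)).
  field. split; lra.
Qed.

Lemma gamma2_integrand_neg_h s h : s <> 0 -> 0 < h ->
  (u (0 + - h + s) - u (0 + - h) - u (0 + s) + u 0) ^ 2 / (apow (- h) (1 + beta) * apow s (1 + beta))
  = g2_integrand beta u (- s) h.
Proof.
  intros Hs Hh. rewrite !Rplus_0_l, (u_zero Hu), Rplus_0_r.
  rewrite !apow_nonzero, Rabs_Ropp, (Rabs_right h) by lra.
  replace (- h + s) with (- (h + - s)) by ring.
  rewrite !(prof_even Hu), <- ((prof_even Hu) s).
  unfold g2_integrand, diff2. rewrite Rabs_Ropp, !Rpower_Ropp.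
  pose proof (Rpower_gt_0 h (1 + beta)). pose proof (Rpower_gt_0 (Rabs s) (1 + beta)).
  field. split; lra.
Qed.

Lemma gamma2_bound : 2 * eps <= 1 -> beta - eps <> 1 -> exists G, gamma2_at beta u 0 G /\ 0 < G /\
  G <= c_beta beta ^ 2 * (2 * (2 * K / (2 * q - 2 * beta) + 2 * K / eps)).
Proof.
  intros Heps_half Hnot_linear. pose proof (prof_beta Hu) as Hb.
  destruct (int_pos_spec _ _ outer_integrand_cont outer_integrand_nonneg (outer_integrand_bounded Heps_half))
    as (A & B & C).
  set (I := int_pos (outer_integrand beta u)) in *.
  pose proof (c_beta_pos beta Hb) as Hc.
  assert (HI : 0 < I).
  { apply Rlt_le_trans with (RInt (outer_integrand beta u) 2 3); [| apply C; lra].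
    apply RInt_gt_0; [lra| intros; apply outer_integrand_pos; [exact Hnot_linear| lra]| intros; apply outer_integrand_cont; lra]. }
  exists (c_beta beta ^ 2 * (I + I)). split; [| split].
  - exists (outer_integrand beta u), (I + I). split; [| split; [| reflexivity]].
    + intros s Hs. exists (inner_integral beta u s), (inner_integral beta u (- s)).
      split; [| split; [| reflexivity]].
      * apply (ImpIntPos_ext (g2_integrand beta u s)); [| apply (inner_integral_spec s Hs)].
        intros h Hh. rewrite gamma2_integrand_pos_h; auto.
      * apply (ImpIntPos_ext (g2_integrand beta u (- s))); [| apply (inner_integral_spec (- s)); lra].
        intros h Hh. rewrite gamma2_integrand_neg_h; auto.
    + exists I, I. split; [exact A| split; [| reflexivity]].
      apply (ImpIntPos_ext (outer_integrand beta u)); [| exact A].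
      intros x Hx. unfold outer_integrand. rewrite Ropp_involutive. ring.
  - apply Rmult_lt_0_compat; [apply pow_lt; exact Hc| lra].
  - apply Rmult_le_compat_l; [apply pow_le; lra| lra].
Qed.

End OuterIntegral.

(* An explicit admissible profile, used for the "in particular" part:
     u(x) = |x|^a                            for |x| >= 1,
     u(x) = ca |x|^p + cb |x|^(p+1)          for |x| < 1,
   with a = beta - eps, p = beta + delta, ca = p + 1 - a, cb = a - p < 0;
   the coefficients make the two pieces agree to first order at |x| = 1. *)

Lemma derivable_pt_lim_glue f g h c l d : 0 < d ->
  (forall y, c <= y < c + d -> f y = g y) -> (forall y, c - d < y <= c -> f y = h y) ->
  derivable_pt_lim g c l -> derivable_pt_lim h c l -> derivable_pt_lim f c l.
Proof.
  intros Hd Hg Hh Dg Dh e He.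
  destruct (Dg e He) as [dg Kg]. destruct (Dh e He) as [dh Kh].
  assert (Hm : 0 < Rmin d (Rmin dg dh)) by (repeat apply Rmin_glb_lt; auto; apply cond_pos).
  exists (mkposreal _ Hm). intros x Hx0 Hx. simpl in Hx.
  pose proof (Rmin_l d (Rmin dg dh)). pose proof (Rmin_r d (Rmin dg dh)).
  pose proof (Rmin_l dg dh). pose proof (Rmin_r dg dh).
  apply Rabs_def2 in Hx as Hx'.
  destruct (Rlt_dec 0 x).
  - rewrite (Hg (c + x)), (Hg c) by lra. apply Kg; [exact Hx0| lra].
  - rewrite (Hh (c + x)), (Hh c) by lra. apply Kh; [exact Hx0| lra].
Qed.

Lemma continuity_pt_glue f g h c d : 0 < d ->
  (forall y, c <= y < c + d -> f y = g y) -> (forall y, c - d < y <= c -> f y = h y) ->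
  continuity_pt g c -> continuity_pt h c -> continuity_pt f c.
Proof.
  intros Hd Hg Hh Cg Ch. apply continuity_pt_of_eps. intros e He.
  destruct (continuity_pt_eps g c Cg e He) as (dg & Hdg & Kg).
  destruct (continuity_pt_eps h c Ch e He) as (dh & Hdh & Kh).
  exists (Rmin d (Rmin dg dh)). split; [repeat apply Rmin_glb_lt; assumption|].
  intros y Hy.
  pose proof (Rmin_l d (Rmin dg dh)). pose proof (Rmin_r d (Rmin dg dh)).
  pose proof (Rmin_l dg dh). pose proof (Rmin_r dg dh).
  apply Rabs_def2 in Hy as Hy'.
  destruct (Rle_dec c y).
  - rewrite (Hg y), (Hg c) by lra. apply Kg; lra.
  - rewrite (Hh y), (Hh c) by lra. apply Kh; lra.
Qed.

Lemma derivable_pt_lim_even f x l : (forall y, f (- y) = f y) ->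
  derivable_pt_lim f x l -> derivable_pt_lim f (- x) (- l).
Proof.
  intros Hev D.
  assert (H1 : derivable_pt_lim (fun y => f (- y)) (- x) (l * -1)).
  { apply (derivable_pt_lim_comp Ropp f (- x) (-1) l).
    - exact (derivable_pt_lim_opp id (- x) 1 (derivable_pt_lim_id (- x))).
    - rewrite Ropp_involutive; exact D. }
  replace (- l) with (l * -1) by ring.
  apply (derivable_pt_lim_local _ (fun y => f (- y)) _ _ 1); [lra| intros; rewrite Hev; reflexivity| exact H1].
Qed.

Lemma continuity_pt_odd f x : (forall y, f (- y) = - f y) -> continuity_pt f x -> continuity_pt f (- x).
Proof.
  intros Hod C. apply continuity_pt_of_eps. intros e He.
  destruct (continuity_pt_eps f x C e He) as (d & Hd & K). exists d; split; [exact Hd|].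
  intros y Hy.
  assert (E : f y - f (- x) = - (f (- y) - f x))
    by (rewrite <- (Ropp_involutive y) at 1; rewrite (Hod (- y)), (Hod x); ring).
  rewrite E, Rabs_Ropp. apply K. replace (- y - x) with (- (y - - x)) by ring. rewrite Rabs_Ropp; exact Hy.
Qed.

Definition sgn (x : R) : R := if Rlt_dec 0 x then 1 else if Rlt_dec x 0 then -1 else 0.

Lemma sgn_odd x : sgn (- x) = - sgn x.
Proof. unfold sgn. destruct (Rlt_dec 0 x), (Rlt_dec 0 (- x)), (Rlt_dec (- x) 0), (Rlt_dec x 0); lra. Qed.

Lemma sgn_pos x : 0 < x -> sgn x = 1.
Proof. unfold sgn; intros; destruct (Rlt_dec 0 x); lra. Qed.

Lemma sgn_0 : sgn 0 = 0.
Proof. unfold sgn; destruct (Rlt_dec 0 0); [lra|]; destruct (Rlt_dec 0 0); lra. Qed.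

Lemma Rabs_sgn_le x : Rabs (sgn x) <= 1.
Proof.
  unfold sgn. destruct (Rlt_dec 0 x); [rewrite Rabs_R1; lra|].
  destruct (Rlt_dec x 0); [rewrite Rabs_left; lra| rewrite Rabs_R0; lra].
Qed.

Section Example.
Variables beta delta eps : R.
Hypothesis Hb : 0 < beta < 2.
Hypothesis Hd : 0 < delta.
Hypothesis Hbd : 1 < beta + delta.
Hypothesis He : 0 < eps.
Hypothesis He2 : eps < beta / 2.

Let p := beta + delta.
Let a := beta - eps.
Let ca := p + 1 - a.
Let cb := a - p.

Definition ex_inner (t : R) : R := ca * apow t p + cb * apow t (p + 1).
Definition ex_inner' (t : R) : R := ca * p * apow t (p - 1) + cb * (p + 1) * apow t p.

Definition ex_u (x : R) : R := if Rle_dec 1 (Rabs x) then Rpower (Rabs x) a else ex_inner (Rabs x).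
Definition ex_u' (x : R) : R :=
  sgn x * (if Rle_dec 1 (Rabs x) then a * Rpower (Rabs x) (a - 1) else ex_inner' (Rabs x)).

Definition ex_Lam : R := 2 * p * (p + 1) + (p + 1).

Lemma ex_coef_sum : ca + cb = 1.
Proof. unfold ca, cb; ring. Qed.

Lemma ex_coef_deriv : ca * p + cb * (p + 1) = a.
Proof. unfold ca, cb; ring. Qed.

Lemma ex_coef_bounds : 0 < ca <= p + 1 /\ cb < 0 /\ - cb <= p.
Proof. unfold ca, cb, a, p; lra. Qed.

Lemma ex_Lam_pos : 0 < ex_Lam.
Proof. clear -Hd Hbd. unfold ex_Lam, p; nra. Qed.

Lemma ex_u_even x : ex_u (- x) = ex_u x.
Proof. unfold ex_u; rewrite Rabs_Ropp; reflexivity. Qed.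

Lemma ex_u'_odd x : ex_u' (- x) = - ex_u' x.
Proof. unfold ex_u'; rewrite Rabs_Ropp, sgn_odd; ring. Qed.

Lemma ex_u_inside x : Rabs x < 1 -> ex_u x = ex_inner (Rabs x).
Proof. intros; unfold ex_u; destruct (Rle_dec 1 (Rabs x)); [lra| reflexivity]. Qed.

Lemma ex_u_outside x : 1 <= Rabs x -> ex_u x = Rpower (Rabs x) a.
Proof. intros; unfold ex_u; destruct (Rle_dec 1 (Rabs x)); [reflexivity| lra]. Qed.

Lemma ex_inner_pos t : 0 < t -> ex_inner t = ca * Rpower t p + cb * Rpower t (p + 1).
Proof. intros; unfold ex_inner; rewrite !apow_nonzero, Rabs_right by lra; reflexivity. Qed.

Lemma ex_inner'_pos t : 0 < t -> ex_inner' t = ca * p * Rpower t (p - 1) + cb * (p + 1) * Rpower t p.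
Proof. intros; unfold ex_inner'; rewrite !apow_nonzero, Rabs_right by lra; reflexivity. Qed.

Lemma ex_inner_bounds t : 0 <= t <= 1 -> 0 <= ex_inner t <= ca * apow t p.
Proof.
  intros Ht. destruct (Req_dec t 0) as [->|Hn]; [unfold ex_inner; rewrite !apow_0; lra|].
  rewrite ex_inner_pos, apow_nonzero, Rabs_right, Rpower_plus, Rpower_1 by lra.
  pose proof (Rpower_gt_0 t p). destruct ex_coef_bounds as (Hca & Hcb & _). pose proof ex_coef_sum.
  assert (0 <= (- cb * Rpower t p) * (1 - t)) by (apply Rmult_le_pos; nra).
  assert (0 <= (- cb * Rpower t p) * t) by (apply Rmult_le_pos; nra).
  replace ca with (1 - cb) by lra. split; nra.
Qed.

Lemma ex_inner'_bound t : 0 < t <= 1 -> Rabs (ex_inner' t) <= 2 * p * (p + 1) * Rpower t (p - 1).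
Proof.
  intros Ht. rewrite ex_inner'_pos by lra.
  destruct ex_coef_bounds as (Hca & Hcb & Hcb2). assert (Hp : 1 < p) by (unfold p; lra).
  pose proof (Rpower_gt_0 t (p - 1)). pose proof (Rpower_gt_0 t p).
  assert (Rpower t p <= Rpower t (p - 1)) by (apply Rpower_le_exp_small; lra).
  apply Rle_trans with (Rabs (ca * p * Rpower t (p - 1)) + Rabs (cb * (p + 1) * Rpower t p)); [apply Rabs_triang|].
  rewrite !Rabs_mult, !(Rabs_right (Rpower _ _)), (Rabs_right ca), (Rabs_right p), (Rabs_right (p + 1)),
    (Rabs_left cb) by lra.
  assert (ca * p * Rpower t (p - 1) <= (p + 1) * p * Rpower t (p - 1))
    by (apply Rmult_le_compat_r; [lra| apply Rmult_le_compat_r; lra]).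
  assert (- cb * (p + 1) * Rpower t p <= p * (p + 1) * Rpower t (p - 1))
    by (apply Rmult_le_compat; [apply Rmult_le_pos; lra| lra| apply Rmult_le_compat_r; lra| lra]).
  lra.
Qed.

Lemma ex_u'_inside x : Rabs x < 1 -> Rabs (ex_u' x) <= ex_Lam * apow x (beta + delta - 1).
Proof.
  intros Hx. destruct (Req_dec x 0) as [->|Hx0].
  { unfold ex_u'. rewrite sgn_0, Rmult_0_l, Rabs_R0, apow_0. lra. }
  pose proof (Rabs_pos_lt x Hx0).
  unfold ex_u'. destruct (Rle_dec 1 (Rabs x)); [lra|].
  rewrite apow_nonzero, Rabs_mult by exact Hx0. fold p.
  pose proof (Rabs_sgn_le x). pose proof (ex_inner'_bound (Rabs x) ltac:(lra)).
  assert (Hp : 1 < p) by (unfold p; lra). pose proof (Rpower_gt_0 (Rabs x) (p - 1)).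
  pose proof (Rabs_pos (ex_inner' (Rabs x))). pose proof (Rabs_pos (sgn x)).
  apply Rle_trans with (1 * Rabs (ex_inner' (Rabs x))); [apply Rmult_le_compat_r; lra|].
  unfold ex_Lam. assert (0 <= (p + 1) * Rpower (Rabs x) (p - 1)) by (apply Rmult_le_pos; lra). lra.
Qed.

Lemma ex_u_deriv_0 : derivable_pt_lim ex_u 0 0.
Proof.
  intros e Hep. destruct ex_coef_bounds as (Hca & _ & _).
  destruct (Rpower_small_near_0 ca (p - 1) (e / 2) 1) as (y & Hy & Ky); [lra| unfold p; lra| lra| lra|].
  exists (mkposreal y (proj1 Hy)). intros h Hh0 Hh. simpl in Hh.
  pose proof (Rabs_pos_lt h Hh0).
  rewrite Rplus_0_l, !ex_u_inside by (rewrite ?Rabs_R0; lra). rewrite Rabs_R0.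
  unfold ex_inner at 2. rewrite !apow_0, Rmult_0_r, Rmult_0_r, Rplus_0_r, !Rminus_0_r.
  destruct (ex_inner_bounds (Rabs h)) as [P1 P2]; [split; lra|].
  rewrite apow_nonzero, Rabs_Rabsolu in P2 by lra.
  unfold Rdiv. rewrite Rabs_mult, Rabs_inv, (Rabs_right (ex_inner (Rabs h))) by lra.
  apply Rle_lt_trans with (ca * Rpower (Rabs h) (p - 1)); [| specialize (Ky (Rabs h) ltac:(lra)); lra].
  replace (Rpower (Rabs h) (p - 1)) with (Rpower (Rabs h) p * / Rabs h)
    by (rewrite <- (Rpower_1 (Rabs h)) at 2 by lra; rewrite <- Rpower_Ropp, <- Rpower_plus; f_equal; ring).
  rewrite <- Rmult_assoc. apply Rmult_le_compat_r; [left; apply Rinv_0_lt_compat; lra| lra].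
Qed.

Lemma ex_inner_deriv x : 0 < x ->
  derivable_pt_lim (fun y => ca * Rpower y p + cb * Rpower y (p + 1)) x
    (ca * p * Rpower x (p - 1) + cb * (p + 1) * Rpower x p).
Proof.
  intros Hx.
  replace (ca * p * Rpower x (p - 1) + cb * (p + 1) * Rpower x p)
    with (ca * (p * Rpower x (p - 1)) + cb * ((p + 1) * Rpower x (p + 1 - 1)))
    by (replace (p + 1 - 1) with p by ring; ring).
  apply derivable_pt_lim_plus; apply derivable_pt_lim_scal, derivable_pt_lim_power, Hx.
Qed.

Lemma ex_u_deriv_inside x : 0 < x < 1 -> derivable_pt_lim ex_u x (ex_u' x).
Proof.
  intros Hx. unfold ex_u'. rewrite sgn_pos, Rmult_1_l, Rabs_right by lra.
  destruct (Rle_dec 1 x); [lra|]. rewrite ex_inner'_pos by lra.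
  apply (derivable_pt_lim_local _ (fun y => ca * Rpower y p + cb * Rpower y (p + 1)) _ _ (Rmin x (1 - x)));
    [apply Rmin_glb_lt; lra| | apply ex_inner_deriv; lra].
  intros y Hy. pose proof (Rmin_l x (1 - x)). pose proof (Rmin_r x (1 - x)). apply Rabs_def2 in Hy.
  rewrite ex_u_inside, Rabs_right by (rewrite ?Rabs_right; lra). apply ex_inner_pos; lra.
Qed.

Lemma ex_u_deriv_1 : derivable_pt_lim ex_u 1 (ex_u' 1).
Proof.
  unfold ex_u'. rewrite sgn_pos, Rmult_1_l, Rabs_R1 by lra.
  destruct (Rle_dec 1 1); [|lra]. rewrite Rpower_1_base, Rmult_1_r.
  apply (derivable_pt_lim_glue _ (fun y => Rpower y a) (fun y => ca * Rpower y p + cb * Rpower y (p + 1)) 1 a (1 / 2));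
    [lra| | | |].
  - intros y Hy. rewrite ex_u_outside; rewrite Rabs_right; lra.
  - intros y Hy. destruct (Req_dec y 1) as [->|Hy1].
    + rewrite ex_u_outside, Rabs_R1, !Rpower_1_base by (rewrite Rabs_R1; lra).
      rewrite !Rmult_1_r, ex_coef_sum; reflexivity.
    + rewrite ex_u_inside, Rabs_right by (rewrite ?Rabs_right; lra). apply ex_inner_pos; lra.
  - pose proof (derivable_pt_lim_power 1 a ltac:(lra)) as D. rewrite Rpower_1_base, Rmult_1_r in D. exact D.
  - pose proof (ex_inner_deriv 1 ltac:(lra)) as D. rewrite !Rpower_1_base, !Rmult_1_r, ex_coef_deriv in D. exact D.
Qed.

Lemma ex_u_deriv_outside x : 1 < x -> derivable_pt_lim ex_u x (ex_u' x).
Proof.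
  intros Hx. unfold ex_u'. rewrite sgn_pos, Rmult_1_l, Rabs_right by lra.
  destruct (Rle_dec 1 x); [|lra].
  apply (derivable_pt_lim_local _ (fun y => Rpower y a) _ _ (x - 1)); [lra| |apply derivable_pt_lim_power; lra].
  intros y Hy. apply Rabs_def2 in Hy. rewrite ex_u_outside; rewrite Rabs_right; lra.
Qed.

Lemma ex_u_deriv x : derivable_pt_lim ex_u x (ex_u' x).
Proof.
  assert (Hpos : forall x, 0 <= x -> derivable_pt_lim ex_u x (ex_u' x)).
  { intros y Hy. destruct (Rtotal_order y 1) as [Hy1|[->|Hy1]].
    - destruct (Req_dec y 0) as [->|Hy0].
      + replace (ex_u' 0) with 0 by (unfold ex_u'; rewrite sgn_0; ring). apply ex_u_deriv_0.
      + apply ex_u_deriv_inside; lra.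
    - apply ex_u_deriv_1.
    - apply ex_u_deriv_outside, Hy1. }
  destruct (Rle_dec 0 x); [apply Hpos; assumption|].
  replace x with (- (- x)) by ring. rewrite ex_u'_odd.
  apply derivable_pt_lim_even; [apply ex_u_even| apply Hpos; lra].
Qed.

(* Continuity of ex_u': at 0 by the bound |ex_u'(x)| <= ex_Lam |x|^(p-1),
   elsewhere piecewise. *)
Lemma ex_u'_cont_0 : continuity_pt ex_u' 0.
Proof.
  apply continuity_pt_of_eps. intros e Hep. pose proof ex_Lam_pos.
  destruct (Rpower_small_near_0 ex_Lam (p - 1) (e / 2) 1) as (z & Hz & Kz); [unfold p; lra..|].
  exists z. split; [lra|]. intros w Hw. rewrite Rminus_0_r in Hw.
  assert (U0 : ex_u' 0 = 0) by (unfold ex_u'; rewrite sgn_0; ring). rewrite U0, Rminus_0_r.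
  destruct (Req_dec w 0) as [->|Hw0]; [rewrite U0, Rabs_R0; lra|].
  pose proof (ex_u'_inside w ltac:(lra)) as B. rewrite apow_nonzero in B by exact Hw0.
  pose proof (Kz (Rabs w) ltac:(split; [apply Rabs_pos_lt, Hw0| lra])). unfold p in *. lra.
Qed.

Lemma ex_u'_cont x : continuity_pt ex_u' x.
Proof.
  assert (Hp : 1 < p) by (unfold p; lra).
  assert (Hpos : forall x, 0 <= x -> continuity_pt ex_u' x).
  { intros y Hy. destruct (Rtotal_order y 1) as [Hy1|[->|Hy1]].
    - destruct (Req_dec y 0) as [->|Hy0]; [apply ex_u'_cont_0|].
      apply (continuity_pt_local _ (fun z => ca * p * Rpower z (p - 1) + cb * (p + 1) * Rpower z p) _ (Rmin y (1 - y)));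
        [apply Rmin_glb_lt; lra| |].
      + intros z Hz. pose proof (Rmin_l y (1 - y)). pose proof (Rmin_r y (1 - y)). apply Rabs_def2 in Hz.
        unfold ex_u'. rewrite sgn_pos, Rmult_1_l, Rabs_right by lra.
        destruct (Rle_dec 1 z); [lra| apply ex_inner'_pos; lra].
      + apply continuity_pt_plus; apply continuity_pt_scal, Rpower_continuity_pt; lra.
    - apply (continuity_pt_glue _ (fun z => a * Rpower z (a - 1))
               (fun z => ca * p * Rpower z (p - 1) + cb * (p + 1) * Rpower z p) 1 (1 / 2)); [lra| | | |].
      + intros z Hz. unfold ex_u'. rewrite sgn_pos, Rmult_1_l, Rabs_right by lra.
        destruct (Rle_dec 1 z); [reflexivity| lra].
      + intros z Hz. unfold ex_u'. rewrite sgn_pos, Rmult_1_l, Rabs_right by lra.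
        destruct (Rle_dec 1 z).
        * replace z with 1 by lra. rewrite !Rpower_1_base, !Rmult_1_r, ex_coef_deriv; reflexivity.
        * apply ex_inner'_pos; lra.
      + apply continuity_pt_scal, Rpower_continuity_pt; lra.
      + apply continuity_pt_plus; apply continuity_pt_scal, Rpower_continuity_pt; lra.
    - apply (continuity_pt_local _ (fun z => a * Rpower z (a - 1)) _ (y - 1)); [lra| |].
      + intros z Hz. apply Rabs_def2 in Hz. unfold ex_u'. rewrite sgn_pos, Rmult_1_l, Rabs_right by lra.
        destruct (Rle_dec 1 z); [reflexivity| lra].
      + apply continuity_pt_scal, Rpower_continuity_pt; lra. }
  destruct (Rle_dec 0 x); [apply Hpos; assumption|].
  replace x with (- (- x)) by ring. apply continuity_pt_odd; [apply ex_u'_odd| apply Hpos; lra].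
Qed.

Lemma ex_u_admissible : (1 < beta -> eps < (beta - 1) / 2) -> admissible beta ex_Lam delta eps ex_u.
Proof.
  intros Heps. split; [exact He|]. split; [exact He2|]. split; [exact Heps|].
  split; [exists ex_u'; split; [apply ex_u_deriv| split; [intros x; apply ex_u'_cont| apply ex_u'_inside]]|].
  split; [apply ex_u_even|]. split; [apply ex_u_outside|].
  intros x Hx. rewrite ex_u_inside by exact Hx.
  destruct (ex_inner_bounds (Rabs x)) as [P1 P2]; [pose proof (Rabs_pos x); lra|].
  split; [exact P1|]. apply Rle_trans with (ca * apow x p).
  - replace (apow x p) with (apow (Rabs x) p) by (unfold apow; rewrite Rabs_Rabsolu; reflexivity). exact P2.
  - apply Rmult_le_compat_r; [unfold apow; destruct (Rlt_dec 0 (Rabs x)); [left; apply Rpower_gt_0| lra]|].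
    destruct ex_coef_bounds as (Hca & _ & _). unfold ex_Lam. assert (0 < p) by (unfold p; lra). nra.
Qed.

End Example.

(* First assertion: L u_eps(0) >= C0/eps and 0 < Gamma_2(u_eps)(0) <= C1/eps
   for all admissible u_eps with eps < eps0 (this part does not use
   beta + delta > 1). *)
Lemma uniform_bounds beta Lam delta :
  0 < beta < 2 -> 0 < Lam -> 0 < delta ->
  exists eps0 C0 C1, 0 < eps0 /\ 0 < C0 /\ 0 < C1 /\
     forall (eps : R) (u : R -> R), eps < eps0 -> admissible beta Lam delta eps u ->
       (exists L, frac_lap_at beta u 0 L /\ C0 / eps <= L) /\
       (exists G, gamma2_at beta u 0 G /\ 0 < G <= C1 / eps).
Proof.
  intros Hb HL Hd.
  set (q := beta + Rmin delta ((2 - beta) / 4)).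
  pose proof (Rmin_l delta ((2 - beta) / 4)). pose proof (Rmin_r delta ((2 - beta) / 4)).
  assert (0 < Rmin delta ((2 - beta) / 4)) by (apply Rmin_glb_lt; lra).
  assert (Hq : beta < q <= beta + delta) by (unfold q; lra).
  assert (Hq2 : 2 * q < 2 + beta) by (unfold q; lra).
  set (K := inner_const beta Lam q). assert (HK : 0 < K) by (apply inner_const_pos; lra).
  set (c := c_beta beta). assert (Hc : 0 < c) by (apply c_beta_pos; lra).
  set (A := 2 * K / (2 * q - 2 * beta)). assert (HA : 0 < A) by (apply Rdiv_lt_0_compat; lra).
  exists (Rmin (beta / 4) (1 / 2)), (4 * c), (c ^ 2 * (2 * (A + 2 * K))).
  pose proof (Rmin_l (beta / 4) (1 / 2)). pose proof (Rmin_r (beta / 4) (1 / 2)).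
  split; [apply Rmin_glb_lt; lra| split; [lra| split; [apply Rmult_lt_0_compat; [apply pow_lt| ]; lra|]]].
  intros eps u Heps Hadm.
  destruct (profile_of_admissible beta Lam delta eps u Hb HL Hd Hadm) as [u' Hu].
  pose proof (prof_eps Hu) as He.
  split; [apply (laplacian_lower_bound Hu)|].
  assert (Hnot_linear : beta - eps <> 1).
  { destruct Hadm as (_ & _ & Hlarge & _). destruct (Rlt_dec 1 beta) as [Hgt|]; [specialize (Hlarge Hgt)|]; lra. }
  destruct (gamma2_bound Hu ltac:(lra) q Hq Hq2 ltac:(lra) Hnot_linear) as (G & HG & HGpos & HGle).
  exists G. split; [exact HG| split; [exact HGpos|]].
  fold K c A in HGle. apply Rle_trans with (1 := HGle).
  assert (A <= A / eps).
  { unfold Rdiv. rewrite <- (Rmult_1_r A) at 1. apply Rmult_le_compat_l; [lra|].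
    rewrite <- Rinv_1. apply Rinv_le_contravar; lra. }
  pose proof (pow_lt c 2 Hc).
  replace (c ^ 2 * (2 * (A + 2 * K)) / eps) with (c ^ 2 * (2 * (A / eps + 2 * K / eps))) by (field; lra).
  apply Rmult_le_compat_l; lra.
Qed.

(* Second assertion: with the explicit profile and eps small enough,
   0 < Gamma_2(u)(0) <= C1/eps < mu (C0/eps)^2 <= mu (L u(0))^2. *)
Lemma small_ratio_example beta delta mu : 0 < beta < 2 -> 0 < delta -> 1 < beta + delta -> 0 < mu ->
  exists (Lam' eps : R) (u : R -> R) (L G : R),
     0 < Lam' /\ admissible beta Lam' delta eps u /\
     frac_lap_at beta u 0 L /\ gamma2_at beta u 0 G /\ 0 < G < mu * L ^ 2.
Proof.
  intros Hb Hd Hbd Hmu.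
  set (Lam' := ex_Lam beta delta).
  assert (HL' : 0 < Lam') by (apply ex_Lam_pos; lra).
  destruct (uniform_bounds beta Lam' delta Hb HL' Hd) as (eps0 & C0 & C1 & He0 & HC0 & HC1 & Hbounds).
  set (e1 := if Rlt_dec 1 beta then (beta - 1) / 4 else 1).
  assert (He1 : 0 < e1 /\ (1 < beta -> e1 = (beta - 1) / 4)) by (unfold e1; destruct (Rlt_dec 1 beta); split; intros; lra).
  set (m := mu * C0 ^ 2 / (2 * C1)).
  assert (Hm : 0 < m) by (apply Rdiv_lt_0_compat; [apply Rmult_lt_0_compat; [lra| apply pow_lt; lra]| lra]).
  set (eps := Rmin (Rmin (eps0 / 2) (beta / 4)) (Rmin e1 m)).
  assert (Heps : 0 < eps) by (unfold eps; repeat apply Rmin_glb_lt; lra).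
  assert (E1 : eps <= eps0 / 2) by (unfold eps; eapply Rle_trans; apply Rmin_l).
  assert (E2 : eps <= beta / 4) by (unfold eps; eapply Rle_trans; [apply Rmin_l| apply Rmin_r]).
  assert (E3 : eps <= e1) by (unfold eps; eapply Rle_trans; [apply Rmin_r| apply Rmin_l]).
  assert (E4 : eps <= m) by (unfold eps; eapply Rle_trans; apply Rmin_r).
  assert (Hadm : admissible beta Lam' delta eps (ex_u beta delta eps)).
  { apply ex_u_admissible; [lra..|].
    intros Hb1. destruct He1 as [_ He1']. rewrite (He1' Hb1) in E3. lra. }
  destruct (Hbounds eps (ex_u beta delta eps) ltac:(lra) Hadm) as [(L & HL1 & HL2) (G & HG1 & HG2 & HG3)].
  exists Lam', eps, (ex_u beta delta eps), L, G. do 4 (split; [assumption|]). split; [exact HG2|].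
  assert (HL0 : 0 < C0 / eps) by (apply Rdiv_lt_0_compat; lra).
  assert (C0 / eps * (C0 / eps) <= L * L) by (apply Rmult_le_compat; lra).
  assert (Hsmall : eps * C1 * 2 <= mu * C0 ^ 2).
  { apply Rmult_le_reg_r with (/ (2 * C1)); [apply Rinv_0_lt_compat; lra|].
    replace (eps * C1 * 2 * / (2 * C1)) with eps by (field; lra). exact E4. }
  apply Rle_lt_trans with (C1 / eps); [exact HG3|].
  apply Rlt_le_trans with (mu * (C0 / eps * (C0 / eps))); [| simpl; rewrite Rmult_1_r; apply Rmult_le_compat_l; lra].
  apply Rmult_lt_reg_r with (eps * eps); [nra|].
  replace (C1 / eps * (eps * eps)) with (C1 * eps) by (field; lra).
  replace (mu * (C0 / eps * (C0 / eps)) * (eps * eps)) with (mu * C0 ^ 2) by (field; lra).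
  nra.
Qed.

Theorem theorem3p1 (beta Lam delta : R) :
  0 < beta < 2 -> 0 < Lam -> 0 < delta -> 1 < beta + delta ->
  (exists eps0 C0 C1, 0 < eps0 /\ 0 < C0 /\ 0 < C1 /\
     forall (eps : R) (u : R -> R), eps < eps0 -> admissible beta Lam delta eps u ->
       (exists L, frac_lap_at beta u 0 L /\ C0 / eps <= L) /\
       (exists G, gamma2_at beta u 0 G /\ 0 < G <= C1 / eps))
  /\
  (forall mu, 0 < mu -> exists (Lam' eps : R) (u : R -> R) (L G : R),
     0 < Lam' /\ admissible beta Lam' delta eps u /\
     frac_lap_at beta u 0 L /\ gamma2_at beta u 0 G /\ 0 < G < mu * L ^ 2).
Proof.
  intros Hb HL Hd Hbd. split.
  - exact (uniform_bounds beta Lam delta Hb HL Hd).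
  - intros mu Hmu. exact (small_ratio_example beta delta mu Hb Hd Hbd Hmu).
Qed.
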